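(* Let $(\Omega,Z)$, with $\Omega:[0,1]\times[t_0,\infty)\to\mathbb{R}^2$ and $Z:[t_0,\infty)\to\mathbb{R}^n$, be a (classical) solution of the target system \begin{align*} \partial_t \Omega(x,t) &= E\,\partial_x^2 \Omega(x,t), && x\in(0,1),\\ \dot Z(t) &= (A+B\Gamma_0)Z(t) + B\Theta\,\Omega(0,t),\\ \alpha\,\partial_x\Omega(0,t) &= -\beta\,\Omega(0,t),\\ \Omega(1,t) &= 0 . \end{align*} Then the trivial solution $(\Omega,Z)\equiv 0$ is exponentially stable in the $L^2\times\mathbb{R}^n$ norm: there exist constants $\Pi,\mu>0$, independent of the solution, such that for all $t\ge t_0$ $$\|(\Omega(\cdot,t),Z(t))\|\le \Pi\, e^{-\mu(t-t_0)}\,\|(\Omega(\cdot,t_0),Z(t_0))\|.$$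
   Context: Fix $\varepsilon>0$ and $y_0\in(-1,0)$. Set $\varepsilon_1=\varepsilon/(1+y_0)^2$, $\varepsilon_2=\varepsilon/(1-y_0)^2$ (so $\varepsilon_1>\varepsilon_2>0$), $a=(1+y_0)/(1-y_0)\in(0,1)$, $E=\mathrm{diag}(\varepsilon_1,\varepsilon_2)$, $\alpha=\begin{pmatrix}1&a\\0&0\end{pmatrix}$, $\beta=\begin{pmatrix}0&0\\1&-1\end{pmatrix}$, and $\Theta=(\theta,\ 1-\theta)$ for a fixed $\theta\in[0,1]$. Thus the boundary condition at $x=0$ means $\partial_x\Omega_1(0,t)+a\,\partial_x\Omega_2(0,t)=0$ and $\Omega_1(0,t)=\Omega_2(0,t)$. $A\in\mathbb{R}^{n\times n}$, $B\in\mathbb{R}^{n\times 1}$, and $\Gamma_0\in\mathbb{R}^{1\times n}$ is such that $A+B\Gamma_0$ is Hurwitz. For $f\in L^2(0,1;\mathbb{R}^2)$ and $v\in\mathbb{R}^n$, $\|(f,v)\|=\big(\|f\|_{L^2}^2+|v|_2^2\big)^{1/2}$ with $\|f\|_{L^2}^2=\int_0^1|f(x)|_2^2dx$. *)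

From Stdlib Require Import Reals Lra.
Open Scope R_scope.

Fixpoint rsum (n : nat) (f : nat -> R) : R :=
  match n with O => 0 | S k => rsum k f + f k end.

(* Vectors of R^n are functions nat -> R (only indices < n matter);
   n x n matrices are nat -> nat -> R. *)
Definition mat_vec (n : nat) (M : nat -> nat -> R) (v : nat -> R) (i : nat) : R :=
  rsum n (fun j => M i j * v j).

(* The closed-loop matrix A + B Gamma0, with B : n x 1 and Gamma0 : 1 x n. *)
Definition closed_loop (A : nat -> nat -> R) (B : nat -> R) (G0 : nat -> R) :
  nat -> nat -> R := fun i j => A i j + B i * G0 j.

(* Hurwitz: every (complex) eigenvalue a + i b has a < 0.  A complex
   eigenvector u + i w (u, w real, not both zero) satisfies
   M u = a u - b w and M w = b u + a w. *)
Definition Hurwitz (n : nat) (M : nat -> nat -> R) : Prop :=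
  forall (a b : R) (u w : nat -> R),
    (exists i, (i < n)%nat /\ (u i <> 0 \/ w i <> 0)) ->
    (forall i, (i < n)%nat ->
       mat_vec n M u i = a * u i - b * w i /\
       mat_vec n M w i = b * u i + a * w i) ->
    a < 0.

Definition jcont_on (D : R -> R -> Prop) (f : R -> R -> R) : Prop :=
  forall x t, D x t -> forall e, e > 0 -> exists d, d > 0 /\
    forall y s, D y s -> Rabs (y - x) < d -> Rabs (s - t) < d ->
      Rabs (f y s - f x t) < e.

(* f has derivative l at x relative to the set D (one-sided at endpoints). *)
Definition deriv_within (D : R -> Prop) (f : R -> R) (x l : R) : Prop :=
  limit1_in (fun h => (f (x + h) - f x) / h) (fun h => h <> 0 /\ D (x + h)) l 0.

Definition I01 (x : R) : Prop := 0 <= x <= 1.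

Definition target_solution (eps y0 theta : R) (n : nat)
  (A : nat -> nat -> R) (B : nat -> R) (G0 : nat -> R) (t0 : R)
  (W1 W2 : R -> R -> R) (Z : R -> nat -> R) : Prop :=
  let eps1 := eps / (1 + y0) ^ 2 in
  let eps2 := eps / (1 - y0) ^ 2 in
  let a := (1 + y0) / (1 - y0) in
  let Dc := fun x t => I01 x /\ t0 <= t in
  let Do := fun x t => I01 x /\ t0 < t in
  exists Wx1 Wx2 Wxx1 Wxx2 : R -> R -> R,
    jcont_on Dc W1 /\ jcont_on Dc W2 /\
    jcont_on Do Wx1 /\ jcont_on Do Wx2 /\
    jcont_on Do Wxx1 /\ jcont_on Do Wxx2 /\
    (forall x t, I01 x -> t0 < t ->
       deriv_within I01 (fun y => W1 y t) x (Wx1 x t) /\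
       deriv_within I01 (fun y => W2 y t) x (Wx2 x t) /\
       deriv_within I01 (fun y => Wx1 y t) x (Wxx1 x t) /\
       deriv_within I01 (fun y => Wx2 y t) x (Wxx2 x t)) /\
    (forall x t, 0 < x < 1 -> t0 < t ->
       derivable_pt_lim (fun s => W1 x s) t (eps1 * Wxx1 x t) /\
       derivable_pt_lim (fun s => W2 x s) t (eps2 * Wxx2 x t)) /\
    (* boundary conditions: alpha d_x Omega(0,t) = - beta Omega(0,t), Omega(1,t)=0 *)
    (forall t, t0 < t ->
       Wx1 0 t + a * Wx2 0 t = 0 /\
       W1 0 t = W2 0 t /\
       W1 1 t = 0 /\ W2 1 t = 0) /\
    (forall i, (i < n)%nat -> forall t, t0 <= t ->
       limit1_in (fun s => Z s i) (fun s => t0 <= s) (Z t i) t) /\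
    (forall i, (i < n)%nat -> forall t, t0 < t ->
       derivable_pt_lim (fun s => Z s i) t
         (mat_vec n (closed_loop A B G0) (Z t) i
          + B i * (theta * W1 0 t + (1 - theta) * W2 0 t))).

Definition sq_norm {W1 W2 : R -> R -> R} (n : nat) (Z : R -> nat -> R) (t : R)
  (pr : Riemann_integrable (fun x => W1 x t ^ 2 + W2 x t ^ 2) 0 1) : R :=
  RiemannInt pr + rsum n (fun i => Z t i ^ 2).

(* The proof is a Lyapunov argument.  For the state (W1, W2, Z) we use
     V = E(Z) + gamma (||W1||^2 + ||W2||^2 / a),
   where E is a weighted quadratic Lyapunov function of the Hurwitz matrix
   A + B Gamma0 (from its Schur triangularisation) and gamma is large.
   Along solutions, the boundary fluxes of the two heat components cancel
   thanks to W1_x(0) + a W2_x(0) = 0, W1(0) = W2(0) and eps2 = a^2 eps1; the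
   input B Theta Omega(0) = B W1(0) of the ODE is absorbed by the dissipation
   through the trace bound W1(0)^2 <= ||W1_x||^2, and the Poincare inequality
   turns dissipation into decay: V' <= -mu V.  A comparison argument and the
   equivalence of V with the squared norm give the theorem. *)

From Stdlib Require Import Reals Lra Lia Classical ClassicalEpsilon.
From HB Require Import structures.
From mathcomp Require all_boot all_order all_algebra Rstruct ring.
From mathcomp Require ssrnat ssrbool sesquilinear spectral.
From mathcomp.real_closed Require complex.
From Coquelicot Require Import Coquelicot.
Open Scope R_scope.

Lemma rsum_ext n f g : (forall i, (i < n)%nat -> f i = g i) -> rsum n f = rsum n g.
Proof.
induction n; simpl; intros H; auto.
rewrite IHn by (intros; apply H; lia). rewrite H by lia. auto.
Qed.

Lemma rsum_le n f g : (forall i, (i < n)%nat -> f i <= g i) -> rsum n f <= rsum n g.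
Proof.
induction n; simpl; intros H; [lra|].
assert (rsum n f <= rsum n g) by (apply IHn; intros; apply H; lia).
assert (f n <= g n) by (apply H; lia). lra.
Qed.

Lemma rsum_plus n f g : rsum n (fun i => f i + g i) = rsum n f + rsum n g.
Proof. induction n; simpl; [lra|]. rewrite IHn; lra. Qed.

Lemma rsum_scal n c f : rsum n (fun i => c * f i) = c * rsum n f.
Proof. induction n; simpl; [lra|]. rewrite IHn; lra. Qed.

Lemma rsum_mult_r n f c : rsum n f * c = rsum n (fun i => f i * c).
Proof. induction n; simpl; [lra|]. rewrite <- IHn; lra. Qed.

Lemma rsum_const n c : rsum n (fun _ => c) = INR n * c.
Proof. induction n; simpl rsum; [simpl; lra|]. rewrite IHn, S_INR; lra. Qed.

Lemma rsum_nonneg n f : (forall i, (i < n)%nat -> 0 <= f i) -> 0 <= rsum n f.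
Proof.
intros H. replace 0 with (rsum n (fun _ => 0)) by (rewrite rsum_const; lra).
apply rsum_le; auto.
Qed.

Lemma rsum_term n f i :
  (forall j, (j < n)%nat -> 0 <= f j) -> (i < n)%nat -> f i <= rsum n f.
Proof.
induction n; intros H Hi; [lia|]. simpl.
destruct (Nat.eq_dec i n).
- subst. assert (0 <= rsum n f) by (apply rsum_nonneg; intros; apply H; lia). lra.
- assert (f i <= rsum n f) by (apply IHn; [intros; apply H; lia| lia]).
  assert (0 <= f n) by (apply H; lia). lra.
Qed.

Lemma rsum_single n l a :
  (l < n)%nat -> rsum n (fun i => if Nat.eq_dec i l then a else 0) = a.
Proof.
induction n; intros H; [lia|]. simpl. destruct (Nat.eq_dec n l).
- subst. rewrite (rsum_ext l _ (fun _ => 0)), rsum_const; [lra|].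
  intros i Hi. destruct (Nat.eq_dec i l); [lia|auto].
- rewrite IHn by lia. lra.
Qed.

Lemma uniform_negative n f :
  (forall l, (l < n)%nat -> f l < 0) ->
  exists lam, 0 < lam /\ forall l, (l < n)%nat -> f l <= - lam.
Proof.
induction n; intros H.
- exists 1; split; [lra| intros; lia].
- destruct IHn as [lam [H1 H2]]; [intros; apply H; lia|].
  assert (f n < 0) by (apply H; lia).
  exists (Rmin lam (- f n)). split; [apply Rmin_glb_lt; lra|].
  intros l Hl. destruct (Nat.eq_dec l n).
  + subst. generalize (Rmin_r lam (- f n)); lra.
  + generalize (Rmin_l lam (- f n)) (H2 l ltac:(lia)); lra.
Qed.

Lemma young a b eta : 0 < eta -> a * b <= (eta * (a * a) + b * b / eta) / 2.
Proof.
intros He.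
assert (0 <= (eta * a - b) * (eta * a - b) / eta).
{ apply Rmult_le_pos; [apply Rle_0_sqr| left; apply Rinv_0_lt_compat; lra]. }
assert ((eta * a - b) * (eta * a - b) / eta
        = eta * (a * a) + b * b / eta - 2 * (a * b)) by (field; lra).
lra.
Qed.

Lemma young_abs a b eta : 0 < eta -> Rabs (a * b) <= (eta * (a * a) + b * b / eta) / 2.
Proof.
intros He. unfold Rabs; destruct (Rcase_abs (a * b)).
- replace (- (a * b)) with ((- a) * b) by ring.
  replace (a * a) with ((- a) * (- a)) by ring. apply young; auto.
- apply young; auto.
Qed.

Definition dot (n : nat) (g z : nat -> R) : R := rsum n (fun i => g i * z i).

(** * Schur triangularisation of a real Hurwitz matrix

   The row vector z^T of R^n is mapped to complex coordinates y = z^T P^*, where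
   P is unitary and P M^T P^* = T is triangular (Schur).  Writing the
   coordinates as y_l = <Gr l, z> + i <Gi l, z>, the map is an isometry, it
   intertwines z |-> M z with y |-> y T, and the diagonal of T consists of the
   eigenvalues of M, which have negative real part. *)
Module SchurForm.
Import all_boot all_order all_algebra Rstruct complex ring sesquilinear spectral.
Import GRing.Theory Num.Theory.
Local Open Scope complex_scope.
Local Open Scope ring_scope.
Local Open Scope sesquilinear_scope.
Local Notation re := (@complex.Re R).
Local Notation im := (@complex.Im R).

Lemma rsum_big n (f : nat -> R) : rsum n f = \sum_(i < n) f i.
Proof.
elim: n => [|n IH] /=; first by rewrite big_ord0.
by rewrite big_ord_recr /= IH.
Qed.

Lemma ReD (x y : R[i]) : re (x + y) = re x + re y. Proof. by case: x => ? ?; case: y. Qed.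
Lemma ImD (x y : R[i]) : im (x + y) = im x + im y. Proof. by case: x => ? ?; case: y. Qed.
Lemma ReM (x y : R[i]) : re (x * y) = re x * re y - im x * im y.
Proof. by case: x => ? ?; case: y. Qed.
Lemma ImM (x y : R[i]) : im (x * y) = re x * im y + im x * re y.
Proof. case: x => a b; case: y => c d /=. ring. Qed.
Lemma Re_sum m (F : 'I_m -> R[i]) : re (\sum_(i < m) F i) = \sum_(i < m) re (F i).
Proof. by apply: (big_rec2 (fun a b => re a = b)) => // i a b _ <-; rewrite ReD. Qed.
Lemma Im_sum m (F : 'I_m -> R[i]) : im (\sum_(i < m) F i) = \sum_(i < m) im (F i).
Proof. by apply: (big_rec2 (fun a b => im a = b)) => // i a b _ <-; rewrite ImD. Qed.
Lemma ReCM (r : R) (y : R[i]) : re (r%:C * y) = r * re y.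
Proof. by rewrite ReM /= mul0r subr0. Qed.
Lemma ImCM (r : R) (y : R[i]) : im (r%:C * y) = r * im y.
Proof. by rewrite ImM /= mul0r addr0. Qed.
Lemma Re_mul_conj (y : R[i]) : re (y * y^*) = re y * re y + im y * im y.
Proof. case: y => a b /=. ring. Qed.

Section Triangularisation.
Variable (n' : nat) (M : nat -> nat -> R).
Local Notation n := n'.+1.

Definition Amx : 'M[R[i]]_n := \matrix_(i, j) ((M j i)%:C).
Definition zc (z : nat -> R) : 'rV[R[i]]_n := \row_(i < n) ((z i)%:C).

Lemma zc_mat_vec (z : nat -> R) : zc (mat_vec n M z) = zc z *m Amx.
Proof.
apply/rowP => j; rewrite !mxE /mat_vec rsum_big (@rmorph_sum _ _ (real_complex R)).
by apply: eq_bigr => i _; rewrite !mxE rmorphM mulrC.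
Qed.

(* The real and imaginary parts of a left eigenvector of M^T form a complex
   eigenpair of M, so the Hurwitz hypothesis forces its real part negative. *)
Lemma left_eigenvector_hurwitz : Hurwitz n M ->
  forall (lam : R[i]) (w : 'rV_n), w != 0 -> w *m Amx = lam *: w -> re lam < 0.
Proof.
move=> HH lam w wN0 wA.
have [j wj] : exists j, w 0 j != 0.
  case: (pickP (fun j => w 0 j != 0)) => [j wj | H]; first by exists j.
  exfalso; move/eqP: wN0; apply; apply/rowP => j.
  by move: (H j) => /= /negbFE /eqP ->; rewrite mxE.
pose u (k : nat) := re (w 0 (inord k)).
pose wv (k : nat) := im (w 0 (inord k)).
have eigenpair : forall i, (i < n)%N ->
   \sum_(k < n) M i k * u k = re lam * u i - im lam * wv i /\
   \sum_(k < n) M i k * wv k = im lam * u i + re lam * wv i.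
  move=> i hi.
  have : (w *m Amx) 0 (inord i) = lam * w 0 (inord i) by rewrite wA mxE.
  rewrite mxE => Ewa; split.
  - have := congr1 re Ewa; rewrite Re_sum ReM => <-.
    apply: eq_bigr => k _; rewrite /u inord_val /Amx mxE inordK // ReM /= mulr0 subr0.
    by rewrite mulrC.
  - have := congr1 im Ewa; rewrite Im_sum ImM addrC => <-.
    apply: eq_bigr => k _; rewrite /wv inord_val /Amx mxE inordK // ImM /= mulr0 add0r.
    by rewrite mulrC.
apply/RltP; apply: (HH (re lam) (im lam) u wv).
- exists (val j); split; first by apply/ltP; exact: ltn_ord.
  rewrite /u /wv inord_val; move: wj; case: (w 0 j) => a b /= hab.
  case: (Req_dec a 0) => [a0|]; last by left.
  by right => b0; move: hab; rewrite a0 b0 eqxx.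
- move=> i /ltP hi; rewrite /mat_vec !rsum_big.
  by have [E1 E2] := eigenpair i hi; split.
Qed.

Variable P : 'M[R[i]]_n.
Hypothesis P_unitary : P \is unitarymx.

Definition Ps := P^t*.
Definition T := P *m Amx *m Ps.
Definition yv (z : nat -> R) := zc z *m Ps.

Lemma P_Ps : P *m Ps = 1%:M. Proof. by apply/unitarymxP. Qed.
Lemma Ps_P : Ps *m P = 1%:M.
Proof. by rewrite /Ps -invmx_unitary // mulVmx // unitarymx_unit. Qed.

Lemma yv_mat_vec z : yv (mat_vec n M z) = yv z *m T.
Proof. by rewrite /yv zc_mat_vec /T !mulmxA -(mulmxA (zc z) Ps P) Ps_P mulmx1. Qed.

Definition Gr (l i : nat) : R := re (Ps (inord i) (inord l)).
Definition Gi (l i : nat) : R := im (Ps (inord i) (inord l)).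
Definition Tr (i l : nat) : R := re (T (inord i) (inord l)).
Definition Ti (i l : nat) : R := im (T (inord i) (inord l)).

Lemma dot_Gr z l : (l < n)%N -> dot n (Gr l) z = re (yv z 0 (inord l)).
Proof.
move=> hl; rewrite /dot rsum_big /yv !mxE Re_sum; apply: eq_bigr => i _.
by rewrite !mxE ReCM /Gr /Ps !mxE inord_val mulrC.
Qed.
Lemma dot_Gi z l : (l < n)%N -> dot n (Gi l) z = im (yv z 0 (inord l)).
Proof.
move=> hl; rewrite /dot rsum_big /yv !mxE Im_sum; apply: eq_bigr => i _.
by rewrite !mxE ImCM /Gi /Ps !mxE inord_val mulrC.
Qed.

Lemma dot_Gr_mat_vec z l : (l < n)%N -> dot n (Gr l) (mat_vec n M z) =
  rsum n (fun i => dot n (Gr i) z * Tr i l - dot n (Gi i) z * Ti i l)%R.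
Proof.
move=> hl; rewrite dot_Gr // yv_mat_vec mxE Re_sum rsum_big; apply: eq_bigr => i _.
by rewrite ReM dot_Gr // dot_Gi // /Tr /Ti !inord_val.
Qed.
Lemma dot_Gi_mat_vec z l : (l < n)%N -> dot n (Gi l) (mat_vec n M z) =
  rsum n (fun i => dot n (Gr i) z * Ti i l + dot n (Gi i) z * Tr i l)%R.
Proof.
move=> hl; rewrite dot_Gi // yv_mat_vec mxE Im_sum rsum_big; apply: eq_bigr => i _.
by rewrite ImM dot_Gr // dot_Gi // /Tr /Ti !inord_val.
Qed.

Lemma coordinates_isometry z :
  rsum n (fun l => dot n (Gr l) z * dot n (Gr l) z + dot n (Gi l) z * dot n (Gi l) z)%R
  = rsum n (fun i => z i * z i)%R.
Proof.
rewrite !rsum_big.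
have -> : \sum_(l < n) (dot n (Gr l) z * dot n (Gr l) z + dot n (Gi l) z * dot n (Gi l) z)%R
   = re ((yv z *m (yv z)^t*) 0 0).
  rewrite mxE Re_sum; apply: eq_bigr => l _.
  by rewrite dot_Gr // dot_Gi // inord_val !mxE -Re_mul_conj.
rewrite /yv trmx_mul map_mxM mulmxA -(mulmxA (zc z)) /Ps trmxCK Ps_P mulmx1.
rewrite mxE Re_sum; apply: eq_bigr => i _.
by rewrite !mxE Re_mul_conj /= mulr0 addr0.
Qed.

Hypothesis T_trig : is_trig_mx T.

Lemma T_lower i l : (i < l)%N -> (l < n)%N -> Tr i l = 0 /\ Ti i l = 0.
Proof.
move=> hil hl; have hi : (i < n)%N by apply: ltn_trans hl.
have E : T (inord i) (inord l) = 0 by move/is_trig_mxP: T_trig; apply; rewrite !inordK.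
by rewrite /Tr /Ti E.
Qed.

(* A diagonal entry lam of T is an eigenvalue of T; transported back by P it
   yields a left eigenvector of M^T for lam. *)
Lemma T_diag_neg : Hurwitz n M -> forall l, (l < n)%N -> Tr l l < 0.
Proof.
move=> HH l hl; set l' : 'I_n := inord l; set lam := T l' l'.
have -> : Tr l l = re lam by [].
have eig : eigenvalue T lam.
  rewrite eigenvalue_root_char char_poly_trig // /root horner_prod (bigD1 l') //=.
  by rewrite !hornerE subrr mul0r.
have [v vT vN0] := eigenvalueP eig.
apply: (@left_eigenvector_hurwitz HH lam (v *m P)).
- apply: contraNneq vN0 => w0.
  have -> : v = v *m P *m Ps by rewrite -mulmxA P_Ps mulmx1.
  by rewrite w0 mul0mx.
- have PA : P *m Amx = T *m P by rewrite /T -!mulmxA Ps_P mulmx1.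
  by rewrite -mulmxA PA mulmxA vT -scalemxAl.
Qed.

End Triangularisation.

Lemma hurwitz_triangular (n : nat) (M : nat -> nat -> R) : Hurwitz n M ->
 exists Gr Gi Tr Ti : nat -> nat -> R,
 (forall i l, (i < l)%N -> (l < n)%N -> Tr i l = 0 /\ Ti i l = 0) /\
 (forall l, (l < n)%N -> Tr l l < 0) /\
 (forall z, rsum n (fun l => dot n (Gr l) z * dot n (Gr l) z
                            + dot n (Gi l) z * dot n (Gi l) z)%R
            = rsum n (fun i => z i * z i)%R) /\
 (forall z l, (l < n)%N ->
    dot n (Gr l) (mat_vec n M z)
      = rsum n (fun i => dot n (Gr i) z * Tr i l - dot n (Gi i) z * Ti i l)%R /\
    dot n (Gi l) (mat_vec n M z)
      = rsum n (fun i => dot n (Gr i) z * Ti i l + dot n (Gi i) z * Tr i l)%R).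
Proof.
case: n => [|n'] HH.
  by exists (fun _ _ => 0), (fun _ _ => 0), (fun _ _ => 0), (fun _ _ => 0).
have [Q Qu Qtr] := Schur (Amx n' M) (ltn0Sn n').
rewrite /similar_to conjymx // in Qtr.
exists (@Gr n' Q), (@Gi n' Q), (@Tr n' M Q), (@Ti n' M Q).
split; last split; last split.
- by move=> i l; apply: T_lower.
- by apply: T_diag_neg.
- by move=> z; apply: coordinates_isometry.
- by move=> z l hl; split; [apply: dot_Gr_mat_vec | apply: dot_Gi_mat_vec].
Qed.
End SchurForm.

(** * A weighted quadratic Lyapunov function for a stable triangular matrix

   For y = yr + i yi in C^n and a complex matrix T = Tr + i Ti with T_il = 0
   for i < l and Re T_ll <= -lam, the weights k_l = rho^l (rho large) make
   sum_l k_l Re(conj y_l (yT)_l) <= -(lam/2) sum_l k_l |y_l|^2: each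
   off-diagonal term is split by Young's inequality with parameter eta and
   the geometric weights absorb the part that falls on the later index. *)
Section TriangularLyapunov.
Variables (n : nat) (Tr Ti : nat -> nat -> R).
Hypothesis T_lower : forall i l, (i < l)%nat -> (l < n)%nat -> Tr i l = 0 /\ Ti i l = 0.
Variables (lam tau eta rho : R).
Hypothesis lam_diag : forall l, (l < n)%nat -> Tr l l <= - lam.
Hypothesis tau_bound : forall i l, (i < n)%nat -> (l < n)%nat ->
  Rabs (Tr i l) <= tau /\ Rabs (Ti i l) <= tau.
Hypothesis tau_pos : 0 <= tau.
Hypothesis eta_pos : 0 < eta.
Hypothesis rho_ge1 : 1 <= rho.
Variables yr yi : nat -> R.

(* |y_j|^2 and Re(y_i T_il conj y_l). *)
Definition sqmod (j : nat) : R := yr j * yr j + yi j * yi j.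
Definition cross (i l : nat) : R :=
  (yr i * Tr i l - yi i * Ti i l) * yr l + (yr i * Ti i l + yi i * Tr i l) * yi l.

Lemma sqmod_nonneg j : 0 <= sqmod j.
Proof. unfold sqmod; nra. Qed.

Lemma product_young i l :
  Rabs (yr i * yr l + yi i * yi l) <= (eta * sqmod l + sqmod i / eta) / 2 /\
  Rabs (yr i * yi l - yi i * yr l) <= (eta * sqmod l + sqmod i / eta) / 2.
Proof.
assert (E : (eta * sqmod l + sqmod i / eta) / 2 =
   (eta * (yr l * yr l) + yr i * yr i / eta) / 2
   + (eta * (yi l * yi l) + yi i * yi i / eta) / 2) by (unfold sqmod; field; lra).
assert (E' : (eta * sqmod l + sqmod i / eta) / 2 =
   (eta * (yi l * yi l) + yr i * yr i / eta) / 2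
   + (eta * (yr l * yr l) + yi i * yi i / eta) / 2) by (unfold sqmod; field; lra).
split.
- eapply Rle_trans; [apply Rabs_triang|].
  rewrite (Rmult_comm (yr i)), (Rmult_comm (yi i)).
  generalize (young_abs (yr l) (yr i) eta eta_pos) (young_abs (yi l) (yi i) eta eta_pos).
  lra.
- eapply Rle_trans; [apply Rabs_triang|]. rewrite Rabs_Ropp.
  rewrite (Rmult_comm (yr i)), (Rmult_comm (yi i)).
  generalize (young_abs (yi l) (yr i) eta eta_pos) (young_abs (yr l) (yi i) eta eta_pos).
  lra.
Qed.

(* Diagonal terms are at most -lam |y_l|^2, terms with i < l vanish and terms
   with l < i are bounded by Young's inequality. *)
Lemma cross_bound i l : (i < n)%nat -> (l < n)%nat ->
  cross i l <= (if Nat.eq_dec i l then - lam * sqmod l else 0)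
             + (if Compare_dec.lt_dec l i
                then tau * (eta * sqmod l + sqmod i / eta) else 0).
Proof.
intros Hi Hl. unfold cross. destruct (Nat.eq_dec i l) as [->|ne].
- destruct (Compare_dec.lt_dec l l); [lia|].
  replace ((yr l * Tr l l - yi l * Ti l l) * yr l + (yr l * Ti l l + yi l * Tr l l) * yi l)
    with (Tr l l * sqmod l) by (unfold sqmod; ring).
  generalize (sqmod_nonneg l) (lam_diag l Hl); nra.
- destruct (Compare_dec.lt_dec l i) as [lt|nlt].
  + destruct (tau_bound i l Hi Hl) as [H1 H2].
    destruct (product_young i l) as [HX HY].
    replace ((yr i * Tr i l - yi i * Ti i l) * yr l + (yr i * Ti i l + yi i * Tr i l) * yi l)
      with (Tr i l * (yr i * yr l + yi i * yi l) + Ti i l * (yr i * yi l - yi i * yr l))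
      by ring.
    assert (A1 : Tr i l * (yr i * yr l + yi i * yi l)
                 <= tau * ((eta * sqmod l + sqmod i / eta) / 2)).
    { eapply Rle_trans; [apply Rle_abs|]. rewrite Rabs_mult.
      apply Rmult_le_compat; auto using Rabs_pos. }
    assert (A2 : Ti i l * (yr i * yi l - yi i * yr l)
                 <= tau * ((eta * sqmod l + sqmod i / eta) / 2)).
    { eapply Rle_trans; [apply Rle_abs|]. rewrite Rabs_mult.
      apply Rmult_le_compat; auto using Rabs_pos. }
    lra.
  + destruct (T_lower i l ltac:(lia) Hl) as [-> ->]. lra.
Qed.

Definition weighted_sqmod : R := rsum n (fun i => rho ^ i * sqmod i).

Lemma weighted_sqmod_nonneg : 0 <= weighted_sqmod.
Proof.
apply rsum_nonneg; intros. apply Rmult_le_pos; [left; apply pow_lt; lra| apply sqmod_nonneg].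
Qed.

(* Since rho^l <= rho^i / rho for l < i, the weight moves the 1/eta part of
   each Young split onto the later index at the cost of a factor 1/rho. *)
Lemma weighted_column_bound l : (l < n)%nat ->
  rho ^ l * rsum n (fun i => cross i l)
  <= - lam * (rho ^ l * sqmod l) + (INR n * (tau * eta)) * (rho ^ l * sqmod l)
     + tau / (eta * rho) * weighted_sqmod.
Proof.
intros Hl.
assert (Hk : 0 < rho ^ l) by (apply pow_lt; lra).
set (B := fun i => if Compare_dec.lt_dec l i
                   then tau * (eta * sqmod l + sqmod i / eta) else 0).
assert (Hr : rsum n (fun i => cross i l) <= - lam * sqmod l + rsum n B).
{ eapply Rle_trans; [apply rsum_le; intros i Hi; apply (cross_bound i l Hi Hl)|].
  rewrite rsum_plus, rsum_single by auto. unfold B; lra. }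
assert (HB : rho ^ l * rsum n B
             <= INR n * (tau * eta) * (rho ^ l * sqmod l) + tau / (eta * rho) * weighted_sqmod).
{ unfold weighted_sqmod. rewrite <- rsum_scal, <- rsum_scal.
  replace (INR n * (tau * eta) * (rho ^ l * sqmod l))
    with (rsum n (fun _ => tau * eta * (rho ^ l * sqmod l))) by (rewrite rsum_const; ring).
  rewrite <- rsum_plus. apply rsum_le. intros i Hi. unfold B.
  assert (Si := sqmod_nonneg i). assert (Sl := sqmod_nonneg l).
  assert (Hki : 0 < rho ^ i) by (apply pow_lt; lra).
  destruct (Compare_dec.lt_dec l i) as [lt|nlt].
  - assert (Hp : rho ^ l * rho <= rho ^ i).
    { replace (rho ^ l * rho) with (rho ^ (S l)) by (simpl; ring). apply Rle_pow; auto. }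
    assert (rho ^ l * (sqmod i / eta) <= rho ^ i * sqmod i / (eta * rho)).
    { replace (rho ^ i * sqmod i / (eta * rho)) with ((rho ^ i / rho) * (sqmod i / eta))
        by (field; lra).
      apply Rmult_le_compat_r; [apply Rmult_le_pos; [lra| left; apply Rinv_0_lt_compat; lra]|].
      apply (Rmult_le_reg_r rho); [lra|]. unfold Rdiv. rewrite Rmult_assoc, Rinv_l by lra. lra. }
    replace (rho ^ l * (tau * (eta * sqmod l + sqmod i / eta)))
      with (tau * eta * (rho ^ l * sqmod l) + tau * (rho ^ l * (sqmod i / eta))) by ring.
    replace (tau / (eta * rho) * (rho ^ i * sqmod i))
      with (tau * (rho ^ i * sqmod i / (eta * rho))) by (field; lra).
    apply Rplus_le_compat_l. apply Rmult_le_compat_l; lra.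
  - assert (0 <= tau / (eta * rho))
      by (apply Rmult_le_pos; [lra| left; apply Rinv_0_lt_compat; nra]).
    rewrite Rmult_0_r. apply Rplus_le_le_0_compat; apply Rmult_le_pos; nra. }
assert (rho ^ l * rsum n (fun i => cross i l) <= rho ^ l * (- lam * sqmod l + rsum n B))
  by (apply Rmult_le_compat_l; lra).
lra.
Qed.

End TriangularLyapunov.

Lemma entry_bound n (Tr Ti : nat -> nat -> R) : exists tau, 1 <= tau /\
  forall i l, (i < n)%nat -> (l < n)%nat -> Rabs (Tr i l) <= tau /\ Rabs (Ti i l) <= tau.
Proof.
set (F := fun i l => Rabs (Tr i l) + Rabs (Ti i l)).
assert (HF : forall i l, 0 <= F i l)
  by (intros; unfold F; generalize (Rabs_pos (Tr i l)) (Rabs_pos (Ti i l)); lra).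
assert (Hrow : forall i, 0 <= rsum n (F i)) by (intros; apply rsum_nonneg; auto).
exists (1 + rsum n (fun i => rsum n (F i))). split.
{ assert (0 <= rsum n (fun i => rsum n (F i))) by (apply rsum_nonneg; auto). lra. }
intros i l Hi Hl.
assert (F i l <= rsum n (F i)) by (apply rsum_term; auto).
assert (rsum n (F i) <= rsum n (fun i => rsum n (F i)))
  by (apply (rsum_term n (fun i => rsum n (F i))); auto).
unfold F in *. generalize (Rabs_pos (Tr i l)) (Rabs_pos (Ti i l)). lra.
Qed.

(* With eta = lam / (4 N tau) and rho large, the off-diagonal contributions
   cost at most lam/2, leaving the decay rate c = lam/2. *)
Lemma triangular_lyapunov n (Tr Ti : nat -> nat -> R) :
  (forall i l, (i < l)%nat -> (l < n)%nat -> Tr i l = 0 /\ Ti i l = 0) ->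
  (forall l, (l < n)%nat -> Tr l l < 0) ->
  exists (k : nat -> R) (c : R), 0 < c /\ (forall l, 0 < k l) /\
  forall yr yi : nat -> R,
  rsum n (fun l => k l * (rsum n (fun i => yr i * Tr i l - yi i * Ti i l) * yr l
                        + rsum n (fun i => yr i * Ti i l + yi i * Tr i l) * yi l))
  <= - c * rsum n (fun l => k l * (yr l * yr l + yi l * yi l)).
Proof.
intros Hlow Hdiag.
destruct (uniform_negative n (fun l => Tr l l) Hdiag) as [lam [Hlam Hlam2]].
destruct (entry_bound n Tr Ti) as [tau [Htau0 Htau]].
set (N := INR n + 1).
assert (HN : INR n <= N /\ 0 < N) by (unfold N; generalize (pos_INR n); lra).
set (eta := lam / (4 * N * tau)).
assert (Heta : 0 < eta) by (unfold eta; apply Rdiv_lt_0_compat; nra).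
set (rho := 1 + 4 * N * tau / (eta * lam)).
assert (Hrho1 : 1 <= rho).
{ assert (0 <= 4 * N * tau / (eta * lam)) by (apply Rlt_le, Rdiv_lt_0_compat; nra).
  unfold rho; lra. }
assert (Hrho2 : 4 * N * tau <= rho * eta * lam).
{ unfold rho. replace ((1 + 4 * N * tau / (eta * lam)) * eta * lam)
    with (eta * lam + 4 * N * tau) by (field; nra). nra. }
exists (fun l => rho ^ l), (lam / 2). split; [lra|]. split; [intros; apply pow_lt; lra|].
intros yr yi.
assert (Hcol := weighted_column_bound n Tr Ti Hlow lam tau eta rho Hlam2 Htau
                  ltac:(lra) Heta Hrho1 yr yi).
set (L := weighted_sqmod n rho yr yi) in Hcol.
assert (HL : 0 <= L) by (apply weighted_sqmod_nonneg; lra).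
assert (Hsmall1 : INR n * (tau * eta) <= lam / 4).
{ replace (INR n * (tau * eta)) with (lam / 4 * (INR n / N)) by (unfold eta; field; nra).
  assert (INR n / N <= 1).
  { apply (Rmult_le_reg_r N); [lra|]. unfold Rdiv; rewrite Rmult_assoc, Rinv_l by lra. lra. }
  nra. }
assert (Hsmall2 : INR n * (tau / (eta * rho)) <= lam / 4).
{ assert (0 < eta * rho) by nra.
  apply (Rmult_le_reg_r (eta * rho)); [auto|].
  replace (INR n * (tau / (eta * rho)) * (eta * rho)) with (INR n * tau) by (field; lra).
  assert (INR n * tau <= N * tau) by nra. nra. }
rewrite (rsum_ext n _ (fun l => rho ^ l * rsum n (fun i => cross Tr Ti yr yi i l)))
  by (intros l _; unfold cross; rewrite !rsum_mult_r, <- rsum_plus; reflexivity).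
eapply Rle_trans; [apply rsum_le; exact Hcol|].
rewrite !rsum_plus, rsum_const, !rsum_scal.
change (rsum n (fun l => rho ^ l * (yr l * yr l + yi l * yi l))) with L.
change (rsum n (fun l => rho ^ l * sqmod yr yi l)) with L.
nra.
Qed.

(** Combining the Schur coordinates with the weighted triangular estimate:
   V(z) = sum_l k_l ((<Gr l,z>)^2 + (<Gi l,z>)^2) is equivalent to |z|^2
   and decreases at rate c along z' = M z. *)
Lemma hurwitz_lyapunov n M : Hurwitz n M ->
  exists (Gr Gi : nat -> nat -> R) (k : nat -> R) (c : R),
  0 < c /\ (forall l, 0 < k l) /\
  (forall z, rsum n (fun l => dot n (Gr l) z * dot n (Gr l) z + dot n (Gi l) z * dot n (Gi l) z)
             = rsum n (fun i => z i * z i)) /\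
  (forall z, rsum n (fun l => k l * (dot n (Gr l) (mat_vec n M z) * dot n (Gr l) z
                                   + dot n (Gi l) (mat_vec n M z) * dot n (Gi l) z))
             <= - c * rsum n (fun l => k l * (dot n (Gr l) z * dot n (Gr l) z
                                              + dot n (Gi l) z * dot n (Gi l) z))).
Proof.
intros H.
destruct (SchurForm.hurwitz_triangular n M H) as [Gr [Gi [Tr [Ti [H1 [H2 [H3 H4]]]]]]].
assert (Hlow : forall i l, (i < l)%nat -> (l < n)%nat -> Tr i l = 0 /\ Ti i l = 0).
{ intros i l a b. apply H1; apply (ssrbool.introT ssrnat.ltP); auto. }
assert (Hdiag : forall l, (l < n)%nat -> Tr l l < 0).
{ intros l a. apply (ssrbool.elimT Rstruct.RltP), H2, (ssrbool.introT ssrnat.ltP); auto. }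
destruct (triangular_lyapunov n Tr Ti Hlow Hdiag) as [k [c [Hc [Hk HT]]]].
exists Gr, Gi, k, c. split; [|split; [|split]]; auto.
intros z. eapply Rle_trans; [|exact (HT (fun i => dot n (Gr i) z) (fun i => dot n (Gi i) z))].
right. apply rsum_ext. intros l Hl.
destruct (H4 z l (ssrbool.introT ssrnat.ltP Hl)) as [E1 E2]. rewrite E1, E2. reflexivity.
Qed.

Lemma jcont_const D c : jcont_on D (fun _ _ => c).
Proof.
intros x t _ e He. exists 1; split; [lra|].
intros. rewrite Rminus_diag, Rabs_R0; lra.
Qed.

Lemma jcont_sub (D D' : R -> R -> Prop) f :
  (forall x t, D' x t -> D x t) -> jcont_on D f -> jcont_on D' f.
Proof.
intros HD Hf x t Hx e He. destruct (Hf x t (HD _ _ Hx) e He) as [d [Hd H]].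
exists d; split; auto.
Qed.

Lemma jcont_plus D f g :
  jcont_on D f -> jcont_on D g -> jcont_on D (fun x t => f x t + g x t).
Proof.
intros Hf Hg x t Hx e He.
destruct (Hf x t Hx (e / 2)) as [d1 [Hd1 H1]]; [lra|].
destruct (Hg x t Hx (e / 2)) as [d2 [Hd2 H2]]; [lra|].
exists (Rmin d1 d2); split; [apply Rmin_glb_lt; auto|].
intros y s Hy Hyx Hst.
assert (A1 := H1 y s Hy (Rlt_le_trans _ _ _ Hyx (Rmin_l _ _)) (Rlt_le_trans _ _ _ Hst (Rmin_l _ _))).
assert (A2 := H2 y s Hy (Rlt_le_trans _ _ _ Hyx (Rmin_r _ _)) (Rlt_le_trans _ _ _ Hst (Rmin_r _ _))).
replace (f y s + g y s - (f x t + g x t)) with ((f y s - f x t) + (g y s - g x t)) by ring.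
eapply Rle_lt_trans; [apply Rabs_triang|]. lra.
Qed.

Lemma jcont_opp D f : jcont_on D f -> jcont_on D (fun x t => - f x t).
Proof.
intros Hf x t Hx e He. destruct (Hf x t Hx e He) as [d [Hd H]]. exists d; split; auto.
intros. replace (- f y s - - f x t) with (- (f y s - f x t)) by ring. rewrite Rabs_Ropp. auto.
Qed.

Lemma jcont_minus D f g :
  jcont_on D f -> jcont_on D g -> jcont_on D (fun x t => f x t - g x t).
Proof. intros. apply (jcont_plus D f (fun x t => - g x t)); auto using jcont_opp. Qed.

(* fg - f0 g0 = (f - f0) g + f0 (g - g0), with g bounded by |g0| + 1 nearby. *)
Lemma jcont_mult D f g :
  jcont_on D f -> jcont_on D g -> jcont_on D (fun x t => f x t * g x t).
Proof.
intros Hf Hg x t Hx e He.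
set (a := Rabs (f x t)). set (b := Rabs (g x t)).
assert (Ha : 0 <= a) by apply Rabs_pos. assert (Hb : 0 <= b) by apply Rabs_pos.
set (e1 := Rmin 1 (e / (2 * (b + 1)))). set (e2 := Rmin 1 (e / (2 * (a + 1)))).
assert (He1 : 0 < e1) by (apply Rmin_glb_lt; [lra| apply Rdiv_lt_0_compat; lra]).
assert (He2 : 0 < e2) by (apply Rmin_glb_lt; [lra| apply Rdiv_lt_0_compat; lra]).
destruct (Hf x t Hx e1 He1) as [d1 [Hd1 H1]].
destruct (Hg x t Hx e2 He2) as [d2 [Hd2 H2]].
exists (Rmin d1 d2); split; [apply Rmin_glb_lt; auto|].
intros y s Hy Hyx Hst.
assert (A1 := H1 y s Hy (Rlt_le_trans _ _ _ Hyx (Rmin_l _ _)) (Rlt_le_trans _ _ _ Hst (Rmin_l _ _))).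
assert (A2 := H2 y s Hy (Rlt_le_trans _ _ _ Hyx (Rmin_r _ _)) (Rlt_le_trans _ _ _ Hst (Rmin_r _ _))).
replace (f y s * g y s - f x t * g x t)
  with ((f y s - f x t) * g y s + f x t * (g y s - g x t)) by ring.
eapply Rle_lt_trans; [apply Rabs_triang|]. rewrite !Rabs_mult.
assert (Hgy : Rabs (g y s) <= b + 1).
{ replace (g y s) with ((g y s - g x t) + g x t) by ring.
  eapply Rle_trans; [apply Rabs_triang|].
  generalize (Rmin_l 1 (e / (2 * (a + 1)))). fold e2. unfold b. lra. }
assert (P1 : Rabs (f y s - f x t) * Rabs (g y s) <= e / 2).
{ apply Rle_trans with (e1 * (b + 1)); [apply Rmult_le_compat; auto using Rabs_pos; lra|].
  assert (e1 <= e / (2 * (b + 1))) by apply Rmin_r.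
  replace (e / 2) with (e / (2 * (b + 1)) * (b + 1)) by (field; lra).
  apply Rmult_le_compat_r; lra. }
assert (P2 : Rabs (f x t) * Rabs (g y s - g x t) < e / 2).
{ apply Rle_lt_trans with (a * e2); [apply Rmult_le_compat_l; [apply Rabs_pos| lra]|].
  assert (e2 <= e / (2 * (a + 1))) by apply Rmin_r.
  assert (a * e2 <= a * (e / (2 * (a + 1)))) by (apply Rmult_le_compat_l; lra).
  assert (a * (e / (2 * (a + 1))) = e / 2 - e / (2 * (a + 1))) by (field; lra).
  assert (0 < e / (2 * (a + 1))) by (apply Rdiv_lt_0_compat; lra).
  lra. }
lra.
Qed.

Lemma jcont_scal D c f : jcont_on D f -> jcont_on D (fun x t => c * f x t).
Proof. intros; apply (jcont_mult D (fun _ _ => c) f); auto using jcont_const. Qed.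

Definition cont01 (f : R -> R) : Prop := jcont_on (fun x _ => I01 x) (fun x _ => f x).

Lemma jcont_slice D F t :
  jcont_on D F -> (forall x, I01 x -> D x t) -> cont01 (fun x => F x t).
Proof.
intros HF HD x u Hx e He. destruct (HF x t (HD x Hx) e He) as [d [Hd H]].
exists d; split; auto. intros y s Hy Hyx _.
apply (H y t (HD y Hy) Hyx). rewrite Rminus_diag, Rabs_R0; lra.
Qed.

Lemma cont01_plus f g : cont01 f -> cont01 g -> cont01 (fun x => f x + g x).
Proof. intros; apply (jcont_plus _ (fun x _ => f x) (fun x _ => g x)); auto. Qed.
Lemma cont01_minus f g : cont01 f -> cont01 g -> cont01 (fun x => f x - g x).
Proof. intros; apply (jcont_minus _ (fun x _ => f x) (fun x _ => g x)); auto. Qed.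
Lemma cont01_mult f g : cont01 f -> cont01 g -> cont01 (fun x => f x * g x).
Proof. intros; apply (jcont_mult _ (fun x _ => f x) (fun x _ => g x)); auto. Qed.
Lemma cont01_scal c f : cont01 f -> cont01 (fun x => c * f x).
Proof. intros; apply (jcont_scal _ c (fun x _ => f x)); auto. Qed.

(* Clamping to [0,1] turns a function continuous on [0,1] into one
   continuous on R, to which Coquelicot's integration theory applies. *)
Definition clamp (x : R) : R := Rmax 0 (Rmin 1 x).

Lemma clamp_I01 x : I01 (clamp x).
Proof. unfold clamp, I01. split; [apply Rmax_l| apply Rmax_lub; [lra| apply Rmin_l]]. Qed.
Lemma clamp_id x : I01 x -> clamp x = x.
Proof. unfold clamp, I01; intros [H1 H2]. rewrite Rmin_right, Rmax_right by lra. auto. Qed.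
Lemma clamp_lipschitz x y : Rabs (clamp y - clamp x) <= Rabs (y - x).
Proof. unfold clamp, Rmax, Rmin. repeat destruct Rle_dec; unfold Rabs; repeat destruct Rcase_abs; lra. Qed.

Lemma cont01_clamp_continuous f : cont01 f -> forall x, continuous (fun y => f (clamp y)) x.
Proof.
intros Hf x. apply continuity_pt_filterlim. intros e He.
destruct (Hf (clamp x) 0 (clamp_I01 x) e He) as [d [Hd H]].
exists d; split; auto. intros y [_ Hy]. simpl in *. unfold R_dist in *.
apply (H (clamp y) 0); [apply clamp_I01| |rewrite Rminus_diag, Rabs_R0; lra].
eapply Rle_lt_trans; [apply clamp_lipschitz| auto].
Qed.

Lemma RInt_ext_open (f g : R -> R) a b :
  a <= b -> (forall x, a < x < b -> f x = g x) -> RInt f a b = RInt g a b.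
Proof.
intros Hab H. apply RInt_ext. intros x Hx.
rewrite Rmin_left in Hx by lra. rewrite Rmax_right in Hx by lra. apply H; auto.
Qed.

Lemma cont01_ex_RInt f a b : cont01 f -> 0 <= a -> a <= b -> b <= 1 -> ex_RInt f a b.
Proof.
intros Hf Ha Hab Hb. apply ex_RInt_ext with (fun y => f (clamp y)).
- intros x Hx. rewrite Rmin_left in Hx by lra. rewrite Rmax_right in Hx by lra.
  rewrite clamp_id; auto. unfold I01; lra.
- apply (@ex_RInt_continuous R_CompleteNormedModule). intros; apply cont01_clamp_continuous; auto.
Qed.

Lemma RInt_plus_R f g a b : ex_RInt f a b -> ex_RInt g a b ->
  RInt (fun x => f x + g x) a b = RInt f a b + RInt g a b.
Proof. intros; apply (RInt_plus f g a b); auto. Qed.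
Lemma RInt_minus_R f g a b : ex_RInt f a b -> ex_RInt g a b ->
  RInt (fun x => f x - g x) a b = RInt f a b - RInt g a b.
Proof. intros; apply (RInt_minus f g a b); auto. Qed.
Lemma RInt_scal_R f a b k : ex_RInt f a b -> RInt (fun x => k * f x) a b = k * RInt f a b.
Proof. intros; apply (RInt_scal f a b k); auto. Qed.
Lemma RInt_const_R a b c : RInt (fun _ => c) a b = (b - a) * c.
Proof. apply (RInt_const a b c). Qed.

Lemma RInt01_bounds f lo hi : ex_RInt f 0 1 ->
  (forall x, 0 < x < 1 -> lo <= f x <= hi) -> lo <= RInt f 0 1 <= hi.
Proof.
intros Hf H. split.
- replace lo with (RInt (fun _ => lo) 0 1) by (rewrite RInt_const_R; lra).
  apply RInt_le; [lra| apply ex_RInt_const| auto|]. intros; apply H; auto.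
- replace hi with (RInt (fun _ => hi) 0 1) by (rewrite RInt_const_R; lra).
  apply RInt_le; [lra| auto| apply ex_RInt_const|]. intros; apply H; auto.
Qed.

(** * Calculus on [0,1] with one-sided derivatives at the endpoints *)

(* Affine extension of f beyond [0,1] along its one-sided derivatives; it is
   differentiable on R at every point of [0,1]. *)
Definition extend (f df : R -> R) (x : R) : R :=
  if Rlt_dec x 0 then f 0 + df 0 * x
  else if Rlt_dec 1 x then f 1 + df 1 * (x - 1) else f x.

Lemma extend_id f df x : I01 x -> extend f df x = f x.
Proof.
unfold extend, I01; intros [H1 H2].
destruct (Rlt_dec x 0); [lra|]. destruct (Rlt_dec 1 x); [lra|]. auto.
Qed.

Lemma extend_derivable f df x :
  I01 x -> deriv_within I01 f x (df x) -> derivable_pt_lim (extend f df) x (df x).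
Proof.
intros Hx H eps Heps.
destruct (H eps Heps) as [alp [Halp Hl]].
set (m0 := if Rlt_dec 0 x then x else 1).
set (m1 := if Rlt_dec x 1 then 1 - x else 1).
assert (Hm0 : 0 < m0) by (unfold m0; destruct (Rlt_dec 0 x); lra).
assert (Hm1 : 0 < m1) by (unfold m1; destruct (Rlt_dec x 1); lra).
assert (Hd : 0 < Rmin alp (Rmin m0 m1)) by (repeat apply Rmin_glb_lt; auto).
exists (mkposreal _ Hd). intros h Hh Hhd. simpl in Hhd.
assert (Ha : Rabs h < alp) by (eapply Rlt_le_trans; [apply Hhd| apply Rmin_l]).
assert (H0 : Rabs h < m0)
  by (eapply Rlt_le_trans; [apply Hhd| eapply Rle_trans; [apply Rmin_r| apply Rmin_l]]).
assert (H1 : Rabs h < m1)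
  by (eapply Rlt_le_trans; [apply Hhd| eapply Rle_trans; [apply Rmin_r| apply Rmin_r]]).
rewrite (extend_id f df x Hx). unfold I01 in Hx. unfold extend.
destruct (Rlt_dec (x + h) 0) as [c1|c1].
{ assert (x = 0).
  { unfold m0 in H0. destruct (Rlt_dec 0 x); [|lra].
    unfold Rabs in H0; destruct Rcase_abs in H0; lra. }
  subst x. replace ((f 0 + df 0 * (0 + h) - f 0) / h - df 0) with 0 by (field; auto).
  rewrite Rabs_R0; auto. }
destruct (Rlt_dec 1 (x + h)) as [c2|c2].
{ assert (x = 1).
  { unfold m1 in H1. destruct (Rlt_dec x 1); [|lra].
    unfold Rabs in H1; destruct Rcase_abs in H1; lra. }
  subst x. replace ((f 1 + df 1 * (1 + h - 1) - f 1) / h - df 1) with 0 by (field; auto).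
  rewrite Rabs_R0; auto. }
apply (Hl h). split.
- split; [auto| unfold I01; lra].
- simpl. unfold R_dist. rewrite Rminus_0_r. auto.
Qed.

Lemma ftc01 F G a b : (forall x, I01 x -> derivable_pt_lim F x (G x)) -> cont01 G ->
  0 <= a -> a <= b -> b <= 1 -> RInt G a b = F b - F a.
Proof.
intros HF HG Ha Hab Hb.
assert (Hi : is_RInt (fun y => G (clamp y)) a b (minus (F b) (F a))).
{ apply (@is_RInt_derive R_CompleteNormedModule).
  - intros x Hx. rewrite Rmin_left in Hx by lra. rewrite Rmax_right in Hx by lra.
    rewrite clamp_id by (unfold I01; lra). apply is_derive_Reals, HF. unfold I01; lra.
  - intros x _. apply cont01_clamp_continuous; auto. }
transitivity (RInt (fun y => G (clamp y)) a b).
- apply RInt_ext_open; auto. intros x Hx. rewrite clamp_id; auto. unfold I01; lra.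
- exact (@is_RInt_unique R_CompleteNormedModule _ _ _ _ Hi).
Qed.

Lemma ftc_within f f1 a b : (forall x, I01 x -> deriv_within I01 f x (f1 x)) -> cont01 f1 ->
  0 <= a -> a <= b -> b <= 1 -> RInt f1 a b = f b - f a.
Proof.
intros D C Ha Hab Hb.
rewrite (ftc01 (extend f f1) f1 a b); auto.
- rewrite !extend_id; auto; unfold I01; lra.
- intros x Hx; apply extend_derivable; auto.
Qed.

Lemma integration_by_parts f f1 f2 :
  (forall x, I01 x -> deriv_within I01 f x (f1 x)) ->
  (forall x, I01 x -> deriv_within I01 f1 x (f2 x)) -> cont01 f -> cont01 f1 -> cont01 f2 ->
  RInt (fun x => f x * f2 x) 0 1 = f 1 * f1 1 - f 0 * f1 0 - RInt (fun x => f1 x * f1 x) 0 1.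
Proof.
intros D1 D2 C0 C1 C2.
assert (E : RInt (fun x => f1 x * f1 x + f x * f2 x) 0 1
            = extend f f1 1 * extend f1 f2 1 - extend f f1 0 * extend f1 f2 0).
{ apply (ftc01 (fun x => extend f f1 x * extend f1 f2 x)); try lra.
  - intros x Hx.
    replace (f1 x * f1 x + f x * f2 x) with (f1 x * extend f1 f2 x + extend f f1 x * f2 x)
      by (rewrite !extend_id; auto).
    apply (derivable_pt_lim_mult (extend f f1) (extend f1 f2)); apply extend_derivable; auto.
  - apply cont01_plus; apply cont01_mult; auto. }
rewrite RInt_plus_R in E by (apply cont01_ex_RInt; try lra; apply cont01_mult; auto).
rewrite !extend_id in E by (unfold I01; lra). lra.
Qed.

(* (int_a^b g)^2 <= (b - a) int_a^b g^2, from int_a^b (g - mean g)^2 >= 0. *)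
Lemma cauchy_schwarz g a b : a < b -> ex_RInt g a b -> ex_RInt (fun x => g x * g x) a b ->
  RInt g a b * RInt g a b <= (b - a) * RInt (fun x => g x * g x) a b.
Proof.
intros Hab Hg Hgg.
set (c := RInt g a b / (b - a)).
assert (Hc1 : ex_RInt (fun x => (-2 * c) * g x) a b) by (apply (ex_RInt_scal g a b (-2 * c)); auto).
assert (Hc2 : ex_RInt (fun _ : R => c * c) a b) by apply ex_RInt_const.
assert (Hc3 : ex_RInt (fun x => (-2 * c) * g x + c * c) a b)
  by (apply (ex_RInt_plus (fun x => (-2 * c) * g x) (fun _ => c * c)); auto).
assert (H0 : 0 <= RInt (fun x => g x * g x + ((-2 * c) * g x + c * c)) a b).
{ apply RInt_ge_0; [lra| apply (ex_RInt_plus (fun x => g x * g x)); auto|]. intros x _.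
  replace (g x * g x + (-2 * c * g x + c * c)) with ((g x - c) * (g x - c)) by ring.
  apply Rle_0_sqr. }
rewrite RInt_plus_R, RInt_plus_R, RInt_scal_R, RInt_const_R in H0 by auto.
unfold c in H0.
set (I := RInt g a b) in *. set (J := RInt (fun x => g x * g x) a b) in *.
replace (J + (-2 * (I / (b - a)) * I + (b - a) * (I / (b - a) * (I / (b - a)))))
  with ((J * (b - a) - I * I) / (b - a)) in H0 by (field; lra).
assert (0 <= J * (b - a) - I * I).
{ replace (J * (b - a) - I * I) with ((J * (b - a) - I * I) / (b - a) * (b - a)) by (field; lra).
  apply Rmult_le_pos; lra. }
lra.
Qed.

Lemma trace_bound f f1 : (forall x, I01 x -> deriv_within I01 f x (f1 x)) -> cont01 f1 ->
  f 1 = 0 -> f 0 * f 0 <= RInt (fun x => f1 x * f1 x) 0 1.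
Proof.
intros D C H1.
assert (E : RInt f1 0 1 = - f 0) by (rewrite (ftc_within f f1 0 1); auto; lra).
assert (H := cauchy_schwarz f1 0 1 Rlt_0_1 (cont01_ex_RInt f1 0 1 C ltac:(lra) ltac:(lra) ltac:(lra))
   (cont01_ex_RInt _ 0 1 (cont01_mult f1 f1 C C) ltac:(lra) ltac:(lra) ltac:(lra))).
rewrite E in H. lra.
Qed.

(* Poincare inequality for functions vanishing at 1: int f^2 <= int f'^2,
   since f(x)^2 <= (1 - x) int_x^1 f'^2 for every x. *)
Lemma poincare f f1 : (forall x, I01 x -> deriv_within I01 f x (f1 x)) ->
  cont01 f -> cont01 f1 -> f 1 = 0 ->
  RInt (fun x => f x * f x) 0 1 <= RInt (fun x => f1 x * f1 x) 0 1.
Proof.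
intros D Cf C H1.
set (C2 := RInt (fun x => f1 x * f1 x) 0 1).
assert (Hgg : cont01 (fun x => f1 x * f1 x)) by (apply cont01_mult; auto).
assert (Hpt : forall x, 0 < x < 1 -> f x * f x <= C2).
{ intros x Hx.
  assert (E : RInt f1 x 1 = - f x) by (rewrite (ftc_within f f1 x 1); auto; lra).
  assert (H := cauchy_schwarz f1 x 1 (proj2 Hx)
                 (cont01_ex_RInt f1 x 1 C ltac:(lra) ltac:(lra) ltac:(lra))
                 (cont01_ex_RInt _ x 1 Hgg ltac:(lra) ltac:(lra) ltac:(lra))).
  rewrite E in H.
  assert (Ch : RInt (fun x => f1 x * f1 x) 0 x + RInt (fun x => f1 x * f1 x) x 1 = C2).
  { apply (RInt_Chasles (V := R_CompleteNormedModule) (fun x => f1 x * f1 x) 0 x 1);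
      apply cont01_ex_RInt; auto; lra. }
  assert (P1 : 0 <= RInt (fun x => f1 x * f1 x) 0 x).
  { apply RInt_ge_0; [lra| apply cont01_ex_RInt; auto; lra|]. intros; apply Rle_0_sqr. }
  assert (P2 : 0 <= RInt (fun x => f1 x * f1 x) x 1).
  { apply RInt_ge_0; [lra| apply cont01_ex_RInt; auto; lra|]. intros; apply Rle_0_sqr. }
  replace (- f x * - f x) with (f x * f x) in H by ring. nra. }
assert (Hb := RInt01_bounds (fun x => f x * f x) 0 C2
                (cont01_ex_RInt _ 0 1 (cont01_mult f f Cf Cf) ltac:(lra) ltac:(lra) ltac:(lra))).
simpl in Hb. apply Hb. intros x Hx. split; [apply Rle_0_sqr| auto].
Qed.

(* Compactness of [0,1]: a jointly continuous G(x,s) is continuous in s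
   uniformly in x. *)
Lemma jcont_uniform_in_space D G t :
  jcont_on D G -> (forall x, I01 x -> D x t) -> forall e, 0 < e ->
  exists d, 0 < d /\
    forall x s, I01 x -> D x s -> Rabs (s - t) < d -> Rabs (G x s - G x t) < e.
Proof.
intros HG HD e He.
assert (Hex : forall p, exists d : posreal, I01 p -> forall y s, D y s ->
          Rabs (y - p) < d -> Rabs (s - t) < d -> Rabs (G y s - G p t) < e / 2).
{ intros p. destruct (classic (I01 p)) as [Hp|Hp].
  - destruct (HG p t (HD p Hp) (e / 2)) as [d [Hd H]]; [lra|].
    exists (mkposreal d Hd). intros _. exact H.
  - exists (mkposreal 1 Rlt_0_1). intros; contradiction. }
set (delta := fun p => proj1_sig (constructive_indefinite_description _ (Hex p))).
assert (Hdelta : forall p, I01 p -> forall y s, D y s ->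
          Rabs (y - p) < delta p -> Rabs (s - t) < delta p -> Rabs (G y s - G p t) < e / 2)
  by (intros p; exact (proj2_sig (constructive_indefinite_description _ (Hex p)))).
destruct (compactness_value_1d 0 1 delta) as [d Hd].
exists d; split; [apply cond_pos|].
intros x s Hx Hs Hst.
destruct (Rlt_dec (Rabs (G x s - G x t)) e) as [ok|nok]; auto.
exfalso. apply (Hd x Hx). intros [p [Hp [Hxp Hdp]]]. apply nok.
assert (A := Hdelta p Hp x s Hs Hxp ltac:(lra)).
assert (B := Hdelta p Hp x t (HD x Hx) Hxp ltac:(rewrite Rminus_diag, Rabs_R0; apply cond_pos)).
replace (G x s - G x t) with ((G x s - G p t) - (G x t - G p t)) by ring.
eapply Rle_lt_trans; [apply Rabs_triang|]. rewrite Rabs_Ropp. lra.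
Qed.

(* Mean value theorem: if df stays within e of df(t) on the segment from t to
   t + h, so does the difference quotient of f. *)
Lemma difference_quotient_close f df t h e : h <> 0 ->
  (forall u, Rabs (u - t) <= Rabs h -> derivable_pt_lim f u (df u)) ->
  (forall u, Rabs (u - t) < Rabs h -> Rabs (df u - df t) < e) ->
  Rabs (/ h * (f (t + h) - f t) - df t) < e.
Proof.
intros Hh HD Hc. destruct (Rlt_dec 0 h) as [hp|hn].
- rewrite Rabs_right in HD, Hc by lra.
  destruct (MVT_cor2 f df t (t + h)) as [c [Ec Hc']]; [lra| |].
  { intros u Hu. apply HD. unfold Rabs; destruct Rcase_abs; lra. }
  rewrite Ec. replace (/ h * (df c * (t + h - t))) with (df c) by (field; lra).
  apply Hc. unfold Rabs; destruct Rcase_abs; lra.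
- rewrite Rabs_left in HD, Hc by lra.
  destruct (MVT_cor2 f df (t + h) t) as [c [Ec Hc']]; [lra| |].
  { intros u Hu. apply HD. unfold Rabs; destruct Rcase_abs; lra. }
  replace (f (t + h) - f t) with (- (f t - f (t + h))) by ring.
  rewrite Ec. replace (/ h * - (df c * (t - (t + h)))) with (df c) by (field; lra).
  apply Hc. unfold Rabs; destruct Rcase_abs; lra.
Qed.

(* Differentiation under the integral sign: by the mean value theorem the
   difference quotient of F(x,.) is a value of dF(x,.) nearby, which is
   uniformly close to dF(x,t). *)
Lemma derivable_RInt_param F dF t0 t : t0 < t ->
  jcont_on (fun x s => I01 x /\ t0 < s) F ->
  jcont_on (fun x s => I01 x /\ t0 < s) dF ->
  (forall x s, 0 < x < 1 -> t0 < s -> derivable_pt_lim (fun u => F x u) s (dF x s)) ->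
  derivable_pt_lim (fun s => RInt (fun x => F x s) 0 1) t (RInt (fun x => dF x t) 0 1).
Proof.
intros Ht HF HdF HD eps Heps.
destruct (jcont_uniform_in_space _ dF t HdF (fun x Hx => conj Hx Ht) (eps / 2))
  as [d [Hd Hu]]; [lra|].
assert (Hr : 0 < Rmin d ((t - t0) / 2)) by (apply Rmin_glb_lt; lra).
exists (mkposreal _ Hr). intros h Hh0 Hh. simpl in Hh.
assert (Hhd : Rabs h < d) by (eapply Rlt_le_trans; [apply Hh| apply Rmin_l]).
assert (Hht : Rabs h < (t - t0) / 2) by (eapply Rlt_le_trans; [apply Hh| apply Rmin_r]).
set (s := t + h).
assert (Hs : t0 < s) by (unfold s, Rabs in *; destruct Rcase_abs in Hht; lra).
assert (Cs : cont01 (fun x => F x s)) by (apply (jcont_slice _ F s HF); intros; split; auto).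
assert (Ct : cont01 (fun x => F x t)) by (apply (jcont_slice _ F t HF); intros; split; auto).
assert (Cd : cont01 (fun x => dF x t)) by (apply (jcont_slice _ dF t HdF); intros; split; auto).
set (k := fun x => / h * (F x s - F x t) - dF x t).
assert (Ck : cont01 k) by (apply cont01_minus; auto; apply cont01_scal, cont01_minus; auto).
assert (Ek : RInt k 0 1 = (RInt (fun x => F x s) 0 1 - RInt (fun x => F x t) 0 1) / h
                          - RInt (fun x => dF x t) 0 1).
{ unfold k.
  rewrite (RInt_minus_R (fun x => / h * (F x s - F x t)))
    by (apply cont01_ex_RInt; auto using cont01_minus, cont01_scal; lra).
  rewrite (RInt_scal_R (fun x => F x s - F x t))
    by (apply cont01_ex_RInt; auto using cont01_minus; lra).
  rewrite RInt_minus_R by (apply cont01_ex_RInt; auto; lra).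
  unfold Rdiv; rewrite (Rmult_comm (/ h)); reflexivity. }
fold s. rewrite <- Ek.
assert (Hk : forall x, 0 < x < 1 -> Rabs (k x) < eps / 2).
{ intros x Hx. apply (difference_quotient_close (fun u => F x u) (dF x)); auto.
  - intros u Hut. apply HD; auto. unfold Rabs in *; repeat destruct Rcase_abs; lra.
  - intros u Hut. apply Hu; [unfold I01; lra| split; [unfold I01; lra|]|];
      unfold Rabs in *; repeat destruct Rcase_abs; lra. }
assert (Hb := RInt01_bounds k (- (eps / 2)) (eps / 2) (cont01_ex_RInt k 0 1 Ck ltac:(lra) ltac:(lra) ltac:(lra))).
destruct Hb as [Hb1 Hb2].
{ intros x Hx. specialize (Hk x Hx). unfold Rabs in Hk; destruct Rcase_abs in Hk; lra. }
unfold Rabs; destruct Rcase_abs; lra.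
Qed.

Lemma limit_RInt_param F t0 : jcont_on (fun x s => I01 x /\ t0 <= s) F ->
  limit1_in (fun s => RInt (fun x => F x s) 0 1) (fun s => t0 <= s)
            (RInt (fun x => F x t0) 0 1) t0.
Proof.
intros HF eps Heps.
destruct (jcont_uniform_in_space _ F t0 HF (fun x Hx => conj Hx (Rle_refl t0)) (eps / 2))
  as [d [Hd Hu]]; [lra|].
exists d; split; [lra|]. intros s [Hs Hsd]. simpl in *. unfold R_dist in *.
assert (Cs : cont01 (fun x => F x s)) by (apply (jcont_slice _ F s HF); intros; split; auto).
assert (Ct : cont01 (fun x => F x t0)) by (apply (jcont_slice _ F t0 HF); intros; split; auto; lra).
rewrite <- RInt_minus_R by (apply cont01_ex_RInt; auto; lra).
assert (Hb := RInt01_bounds (fun x => F x s - F x t0) (- (eps / 2)) (eps / 2)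
                (cont01_ex_RInt _ 0 1 (cont01_minus _ _ Cs Ct) ltac:(lra) ltac:(lra) ltac:(lra))).
destruct Hb as [Hb1 Hb2].
{ intros x Hx. assert (Hk : Rabs (F x s - F x t0) < eps / 2)
    by (apply Hu; [unfold I01; lra| split; [unfold I01; lra| auto]| auto]).
  unfold Rabs in Hk; destruct Rcase_abs in Hk; lra. }
unfold Rabs; destruct Rcase_abs; lra.
Qed.

Lemma derivable_rsum n (f df : nat -> R -> R) t :
  (forall i, (i < n)%nat -> derivable_pt_lim (f i) t (df i t)) ->
  derivable_pt_lim (fun s => rsum n (fun i => f i s)) t (rsum n (fun i => df i t)).
Proof.
induction n; intros H; simpl.
- apply (derivable_pt_lim_const 0).
- apply (derivable_pt_lim_plus (fun s => rsum n (fun i => f i s)) (f n));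
    [apply IHn; intros|]; apply H; lia.
Qed.

Lemma limit_rsum n (f : nat -> R -> R) D (l : nat -> R) t :
  (forall i, (i < n)%nat -> limit1_in (f i) D (l i) t) ->
  limit1_in (fun s => rsum n (fun i => f i s)) D (rsum n l) t.
Proof.
induction n as [|m IH]; intros H; simpl.
- apply (limit_free (fun _ => 0) D 0 t).
- apply (limit_plus (fun s => rsum m (fun i => f i s)) (f m));
    [apply IH; intros|]; apply H; lia.
Qed.

(** * Comparison principle *)

Lemma limit_of_continuity f D t0 : continuity_pt f t0 -> limit1_in f D (f t0) t0.
Proof.
intros Hc eps He. destruct (Hc eps He) as [alp [Ha H]]. exists alp; split; auto.
intros x [Dx Hx]. destruct (Req_dec x t0) as [->|ne].
- simpl; unfold R_dist; rewrite Rminus_diag, Rabs_R0; lra.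
- apply H. split; [split; [constructor| auto]| auto].
Qed.

Lemma right_limit_le h t0 t : t0 < t ->
  limit1_in h (fun s => t0 <= s) (h t0) t0 ->
  (forall u, t0 < u <= t -> h t <= h u) -> h t <= h t0.
Proof.
intros Ht HL Hdec.
destruct (Rle_dec (h t) (h t0)) as [ok|nok]; auto. exfalso.
destruct (HL (h t - h t0)) as [alp [Ha H]]; [lra|].
set (u := t0 + Rmin alp (t - t0) / 2).
assert (Hm1 := Rmin_l alp (t - t0)). assert (Hm2 := Rmin_r alp (t - t0)).
assert (Hm : 0 < Rmin alp (t - t0)) by (apply Rmin_glb_lt; lra).
assert (A := Hdec u ltac:(unfold u; lra)).
assert (B : R_dist (h u) (h t0) < h t - h t0).
{ apply H. split; [unfold u; lra|]. simpl. unfold R_dist. rewrite Rabs_right; unfold u; lra. }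
unfold R_dist, Rabs in B; destruct Rcase_abs in B; lra.
Qed.

(* If V is right-continuous at t0 and V' <= -mu V on (t0, oo), then
   V(t) <= exp(-mu (t - t0)) V(t0): the function exp(mu s) V(s) is
   nonincreasing on (t0, oo) by the mean value theorem. *)
Lemma comparison_exponential V t0 mu :
  (forall s, t0 < s -> exists d, derivable_pt_lim V s d /\ d <= - mu * V s) ->
  limit1_in V (fun s => t0 <= s) (V t0) t0 ->
  forall t, t0 <= t -> V t <= exp (- mu * (t - t0)) * V t0.
Proof.
intros HV HL t Ht.
assert (HD : forall s, t0 < s -> derivable_pt_lim V s (Derive V s) /\ Derive V s <= - mu * V s).
{ intros s Hs. destruct (HV s Hs) as [d [Hd Hle]].
  rewrite (is_derive_unique V s d) by (apply is_derive_Reals; auto). auto. }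
set (h := fun s => exp (mu * s) * V s).
assert (Dexp : forall s, derivable_pt_lim (fun s => exp (mu * s)) s (mu * exp (mu * s))).
{ intros s. apply is_derive_Reals. auto_derive; auto. ring. }
assert (Hdec : forall u, t0 < u <= t -> h t <= h u).
{ intros u [Hu Hut]. destruct (Rle_lt_or_eq_dec u t Hut) as [lt|eq]; [|subst; lra].
  destruct (MVT_cor2 h (fun s => mu * exp (mu * s) * V s + exp (mu * s) * Derive V s) u t lt)
    as [c [Ec Hc]].
  { intros c Hc. apply (derivable_pt_lim_mult (fun s => exp (mu * s)) V); auto.
    apply HD; lra. }
  assert (mu * exp (mu * c) * V c + exp (mu * c) * Derive V c <= 0).
  { assert (Derive V c <= - mu * V c) by (apply HD; lra).
    assert (0 < exp (mu * c)) by apply exp_pos. nra. }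
  nra. }
assert (Hh0 : h t <= h t0).
{ destruct (Rle_lt_or_eq_dec t0 t Ht) as [lt|eq]; [|subst; lra].
  apply right_limit_le; auto.
  apply (limit_mul (fun s => exp (mu * s)) V); auto.
  apply (limit_of_continuity (fun s => exp (mu * s))), derivable_continuous_pt. exists (mu * exp (mu * t0)). apply Dexp. }
unfold h in Hh0.
replace (exp (- mu * (t - t0)) * V t0)
  with (exp (- (mu * t)) * (exp (mu * t0) * V t0))
  by (rewrite <- Rmult_assoc, <- exp_plus; f_equal; f_equal; ring).
replace (V t) with (exp (- (mu * t)) * (exp (mu * t) * V t))
  by (rewrite <- Rmult_assoc, <- exp_plus; replace (- (mu * t) + mu * t) with 0 by ring;
      rewrite exp_0; ring).
apply Rmult_le_compat_l; [left; apply exp_pos| auto].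
Qed.

Definition sqL2 (F : R -> R -> R) (s : R) : R := RInt (fun x => F x s * F x s) 0 1.

Definition heat_component (t0 e : R) (W Wx Wxx : R -> R -> R) : Prop :=
  jcont_on (fun x t => I01 x /\ t0 <= t) W /\
  jcont_on (fun x t => I01 x /\ t0 < t) Wx /\
  jcont_on (fun x t => I01 x /\ t0 < t) Wxx /\
  (forall x t, I01 x -> t0 < t ->
     deriv_within I01 (fun y => W y t) x (Wx x t) /\
     deriv_within I01 (fun y => Wx y t) x (Wxx x t)) /\
  (forall x t, 0 < x < 1 -> t0 < t -> derivable_pt_lim (fun s => W x s) t (e * Wxx x t)) /\
  (forall t, t0 < t -> W 1 t = 0).

Section HeatComponent.
Variables (t0 e : R) (W Wx Wxx : R -> R -> R).
Hypothesis heat : heat_component t0 e W Wx Wxx.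

Lemma heat_slice s : t0 <= s -> cont01 (fun x => W x s).
Proof. destruct heat as [C _]. intros Hs. apply (jcont_slice _ W s C). intros; split; auto. Qed.

Lemma heat_sqL2_nonneg s : t0 <= s -> 0 <= sqL2 W s.
Proof.
intros Hs. apply RInt_ge_0; [lra| |intros; apply Rle_0_sqr].
apply cont01_ex_RInt; try lra. apply cont01_mult; apply heat_slice; auto.
Qed.

Lemma heat_sqL2_right_cont : limit1_in (sqL2 W) (fun s => t0 <= s) (sqL2 W t0) t0.
Proof.
destruct heat as [C _].
apply (limit_RInt_param (fun x s => W x s * W x s)). apply jcont_mult; auto.
Qed.

(* Energy identity: d/ds int W^2 = 2 e int W W_xx = -2 e (W(0) W_x(0) + int W_x^2). *)
Lemma heat_energy_identity s : t0 < s ->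
  derivable_pt_lim (sqL2 W) s (- 2 * e * (W 0 s * Wx 0 s + sqL2 Wx s)).
Proof.
intros Hs. destruct heat as [C [Cx [Cxx [Dx [Dt B1]]]]].
assert (Co : jcont_on (fun x t => I01 x /\ t0 < t) W)
  by (apply (jcont_sub (fun x t => I01 x /\ t0 <= t)); auto; intros x t [? ?]; split; auto; lra).
assert (cx : cont01 (fun x => Wx x s)) by (apply (jcont_slice _ Wx s Cx); intros; split; auto).
assert (cxx : cont01 (fun x => Wxx x s)) by (apply (jcont_slice _ Wxx s Cxx); intros; split; auto).
assert (IBP := integration_by_parts (fun y => W y s) (fun y => Wx y s) (fun y => Wxx y s)
                 (fun x Hx => proj1 (Dx x s Hx Hs)) (fun x Hx => proj2 (Dx x s Hx Hs))
                 (heat_slice s ltac:(lra)) cx cxx).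
simpl in IBP. rewrite (B1 s Hs), Rmult_0_l in IBP.
replace (- 2 * e * (W 0 s * Wx 0 s + sqL2 Wx s))
  with (RInt (fun x => 2 * W x s * (e * Wxx x s)) 0 1).
- apply (derivable_RInt_param (fun x u => W x u * W x u)
           (fun x u => 2 * W x u * (e * Wxx x u)) t0 s Hs).
  + apply jcont_mult; auto.
  + apply jcont_mult; apply jcont_scal; auto.
  + intros x u Hx Hu.
    replace (2 * W x u * (e * Wxx x u)) with (e * Wxx x u * W x u + W x u * (e * Wxx x u)) by ring.
    apply (derivable_pt_lim_mult (fun v => W x v) (fun v => W x v)); apply Dt; auto.
- unfold sqL2. rewrite (RInt_ext_open _ (fun x => (2 * e) * (W x s * Wxx x s))) by (lra || (intros; ring)).
  rewrite RInt_scal_R by (apply cont01_ex_RInt; try lra; apply cont01_mult; auto; apply heat_slice; lra).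
  rewrite IBP. lra.
Qed.

Lemma heat_dissipation_bounds s : t0 < s ->
  sqL2 W s <= sqL2 Wx s /\ W 0 s * W 0 s <= sqL2 Wx s.
Proof.
intros Hs. destruct heat as [C [Cx [Cxx [Dx [Dt B1]]]]].
assert (cx : cont01 (fun x => Wx x s)) by (apply (jcont_slice _ Wx s Cx); intros; split; auto).
assert (D : forall x, I01 x -> deriv_within I01 (fun y => W y s) x (Wx x s))
  by (intros x Hx; apply (Dx x s Hx Hs)).
split.
- apply (poincare (fun y => W y s) (fun y => Wx y s)); auto. apply heat_slice; lra.
- apply (trace_bound (fun y => W y s) (fun y => Wx y s)); auto.
Qed.

End HeatComponent.

Lemma dot_affine n G u v g : dot n G (fun i => u i + v i * g) = dot n G u + g * dot n G v.
Proof. unfold dot. rewrite <- rsum_scal, <- rsum_plus. apply rsum_ext; intros; ring. Qed.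

Lemma derivable_dot n G (Z : R -> nat -> R) (Zd : nat -> R) t :
  (forall i, (i < n)%nat -> derivable_pt_lim (fun s => Z s i) t (Zd i)) ->
  derivable_pt_lim (fun s => dot n G (Z s)) t (dot n G Zd).
Proof.
intros H. apply (derivable_rsum n (fun i s => G i * Z s i) (fun i _ => G i * Zd i)).
intros i Hi. apply (derivable_pt_lim_scal (fun s => Z s i)). auto.
Qed.

Lemma limit_dot n G (Z : R -> nat -> R) D t :
  (forall i, (i < n)%nat -> limit1_in (fun s => Z s i) D (Z t i) t) ->
  limit1_in (fun s => dot n G (Z s)) D (dot n G (Z t)) t.
Proof.
intros H. apply (limit_rsum n (fun i s => G i * Z s i) D (fun i => G i * Z t i)).
intros i Hi. apply (limit_mul (fun _ => G i) (fun s => Z s i)); auto.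
apply (limit_free (fun _ => G i) D 0 t).
Qed.

(** * Lyapunov functional of the coupled system *)
Section CoupledSystem.

Variables (n : nat) (M : nat -> nat -> R) (b : nat -> R).
Variables (Gr Gi : nat -> nat -> R) (k : nat -> R) (c : R).
Hypothesis c_pos : 0 < c.
Hypothesis k_pos : forall l, 0 < k l.
Hypothesis coordinates_isometry : forall z,
  rsum n (fun l => dot n (Gr l) z * dot n (Gr l) z + dot n (Gi l) z * dot n (Gi l) z)
  = rsum n (fun i => z i * z i).
Hypothesis coordinates_decay : forall z,
  rsum n (fun l => k l * (dot n (Gr l) (mat_vec n M z) * dot n (Gr l) z
                          + dot n (Gi l) (mat_vec n M z) * dot n (Gi l) z))
  <= - c * rsum n (fun l => k l * (dot n (Gr l) z * dot n (Gr l) z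
                                   + dot n (Gi l) z * dot n (Gi l) z)).

Definition ode_energy (z : nat -> R) : R :=
  rsum n (fun l => k l * (dot n (Gr l) z * dot n (Gr l) z + dot n (Gi l) z * dot n (Gi l) z)).

(* Amplification of the scalar input g through b. *)
Definition input_gain : R :=
  rsum n (fun l => k l * (dot n (Gr l) b * dot n (Gr l) b + dot n (Gi l) b * dot n (Gi l) b)) / c.

Lemma ode_energy_nonneg z : 0 <= ode_energy z.
Proof. apply rsum_nonneg; intros l _. apply Rmult_le_pos; [left; auto| nra]. Qed.

Lemma input_gain_nonneg : 0 <= input_gain.
Proof.
apply Rmult_le_pos; [| left; apply Rinv_0_lt_compat; auto].
apply rsum_nonneg; intros l _. apply Rmult_le_pos; [left; auto| nra].
Qed.

Lemma ode_energy_equiv : exists kmin kmax, 0 < kmin /\ 0 < kmax /\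
  forall z, kmin * rsum n (fun i => z i * z i) <= ode_energy z
            <= kmax * rsum n (fun i => z i * z i).
Proof.
destruct (uniform_negative n (fun l => - k l)) as [kmin [Hkmin Hlow]].
{ intros l _. generalize (k_pos l); lra. }
exists kmin, (1 + rsum n k). split; auto.
assert (Hk : 0 <= rsum n k) by (apply rsum_nonneg; intros; left; auto).
split; [lra|]. intros z. rewrite <- coordinates_isometry, <- !rsum_scal. unfold ode_energy.
split; apply rsum_le; intros l Hl; apply Rmult_le_compat_r; try nra.
- generalize (Hlow l Hl); lra.
- assert (k l <= rsum n k) by (apply rsum_term; auto; intros; left; auto). lra.
Qed.

Definition ode_energy_rate (z zd : nat -> R) : R :=
  rsum n (fun l => k l * (2 * dot n (Gr l) zd * dot n (Gr l) z
                          + 2 * dot n (Gi l) zd * dot n (Gi l) z)).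

Lemma ode_energy_derivable (Z : R -> nat -> R) (Zd : nat -> R) s :
  (forall i, (i < n)%nat -> derivable_pt_lim (fun u => Z u i) s (Zd i)) ->
  derivable_pt_lim (fun u => ode_energy (Z u)) s (ode_energy_rate (Z s) Zd).
Proof.
intros HZ.
apply (derivable_rsum n (fun l u => k l * (dot n (Gr l) (Z u) * dot n (Gr l) (Z u)
                                          + dot n (Gi l) (Z u) * dot n (Gi l) (Z u)))
        (fun l _ => k l * (2 * dot n (Gr l) Zd * dot n (Gr l) (Z s)
                           + 2 * dot n (Gi l) Zd * dot n (Gi l) (Z s)))).
intros l Hl.
assert (dY := derivable_dot n (Gr l) Z Zd s HZ).
assert (dX := derivable_dot n (Gi l) Z Zd s HZ).
replace (k l * (2 * dot n (Gr l) Zd * dot n (Gr l) (Z s) + 2 * dot n (Gi l) Zd * dot n (Gi l) (Z s)))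
  with (k l * ((dot n (Gr l) Zd * dot n (Gr l) (Z s) + dot n (Gr l) (Z s) * dot n (Gr l) Zd)
             + (dot n (Gi l) Zd * dot n (Gi l) (Z s) + dot n (Gi l) (Z s) * dot n (Gi l) Zd)))
  by ring.
apply derivable_pt_lim_scal, derivable_pt_lim_plus; apply derivable_pt_lim_mult; auto.
Qed.

(* Along z' = M z + b g the energy decays at rate c up to the input:
   the cross term 2 g <b, y> is split by Young's inequality with weight c. *)
Lemma ode_energy_rate_bound z g :
  ode_energy_rate z (fun i => mat_vec n M z i + b i * g)
  <= - c * ode_energy z + input_gain * (g * g).
Proof.
set (Y := fun l => dot n (Gr l) z). set (X := fun l => dot n (Gi l) z).
set (br := fun l => dot n (Gr l) b). set (bi := fun l => dot n (Gi l) b).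
unfold ode_energy_rate.
rewrite (rsum_ext n _ (fun l =>
   2 * (k l * (dot n (Gr l) (mat_vec n M z) * Y l + dot n (Gi l) (mat_vec n M z) * X l))
   + k l * (2 * g * (br l * Y l + bi l * X l))))
  by (intros l _; rewrite !dot_affine; unfold Y, X, br, bi; ring).
rewrite rsum_plus, rsum_scal.
assert (Hlin : rsum n (fun l => k l * (dot n (Gr l) (mat_vec n M z) * Y l
                                       + dot n (Gi l) (mat_vec n M z) * X l))
               <= - c * ode_energy z) by apply coordinates_decay.
assert (Hin : rsum n (fun l => k l * (2 * g * (br l * Y l + bi l * X l)))
              <= rsum n (fun l => c * (k l * (Y l * Y l + X l * X l))
                                  + g * g / c * (k l * (br l * br l + bi l * bi l)))).
{ apply rsum_le. intros l _.
  assert (y1 := young (Y l) (g * br l) c c_pos).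
  assert (y2 := young (X l) (g * bi l) c c_pos).
  assert (Hkl := k_pos l).
  replace (c * (k l * (Y l * Y l + X l * X l)) + g * g / c * (k l * (br l * br l + bi l * bi l)))
    with (k l * ((c * (Y l * Y l) + g * br l * (g * br l) / c)
               + (c * (X l * X l) + g * bi l * (g * bi l) / c))) by (field; lra).
  apply Rmult_le_compat_l; [lra| nra]. }
rewrite rsum_plus, !rsum_scal in Hin.
change (rsum n (fun l => k l * (Y l * Y l + X l * X l))) with (ode_energy z) in Hin.
change input_gain with (rsum n (fun l => k l * (br l * br l + bi l * bi l)) / c).
replace (rsum n (fun l => k l * (br l * br l + bi l * bi l)) / c * (g * g))
  with (g * g / c * rsum n (fun l => k l * (br l * br l + bi l * bi l))) by (field; lra).
lra.
Qed.

Lemma ode_energy_right_cont (Z : R -> nat -> R) t0 :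
  (forall i, (i < n)%nat -> limit1_in (fun s => Z s i) (fun s => t0 <= s) (Z t0 i) t0) ->
  limit1_in (fun s => ode_energy (Z s)) (fun s => t0 <= s) (ode_energy (Z t0)) t0.
Proof.
intros HZ. apply (limit_rsum n (fun l u => k l * (dot n (Gr l) (Z u) * dot n (Gr l) (Z u)
                                                 + dot n (Gi l) (Z u) * dot n (Gi l) (Z u)))).
intros l Hl.
assert (LY := limit_dot n (Gr l) Z _ t0 HZ). assert (LX := limit_dot n (Gi l) Z _ t0 HZ).
apply (limit_mul (fun _ => k l)); [apply (limit_free (fun _ => k l) _ 0 t0)|].
apply limit_plus; apply limit_mul; auto.
Qed.

Variables (eps1 eps2 a theta t0 : R).
Hypothesis eps1_pos : 0 < eps1.
Hypothesis a_pos : 0 < a.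
Hypothesis eps_ratio : eps2 = a * a * eps1.

Definition coupled_solution (W1 W2 : R -> R -> R) (Z : R -> nat -> R) : Prop :=
  exists Wx1 Wx2 Wxx1 Wxx2 : R -> R -> R,
    heat_component t0 eps1 W1 Wx1 Wxx1 /\ heat_component t0 eps2 W2 Wx2 Wxx2 /\
    (forall t, t0 < t -> Wx1 0 t + a * Wx2 0 t = 0 /\ W1 0 t = W2 0 t) /\
    (forall i, (i < n)%nat -> forall t, t0 <= t ->
       limit1_in (fun s => Z s i) (fun s => t0 <= s) (Z t i) t) /\
    (forall i, (i < n)%nat -> forall t, t0 < t ->
       derivable_pt_lim (fun s => Z s i) t
         (mat_vec n M (Z t) i + b i * (theta * W1 0 t + (1 - theta) * W2 0 t))).

(* Weight of the heat energies, chosen so that their dissipation absorbs the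
   input term of the ODE estimate, and the resulting decay rate. *)
Definition heat_weight : R := (input_gain + 1) / eps1.
Definition decay_rate : R := Rmin c (Rmin eps1 (2 * eps2)).

Definition lyap (W1 W2 : R -> R -> R) (Z : R -> nat -> R) (s : R) : R :=
  ode_energy (Z s) + heat_weight * (sqL2 W1 s + / a * sqL2 W2 s).

Definition state_sqnorm (W1 W2 : R -> R -> R) (Z : R -> nat -> R) (s : R) : R :=
  sqL2 W1 s + sqL2 W2 s + rsum n (fun i => Z s i * Z s i).

Lemma heat_weight_pos : 0 < heat_weight.
Proof. unfold heat_weight. generalize input_gain_nonneg; intros. apply Rdiv_lt_0_compat; lra. Qed.

Lemma decay_rate_pos : 0 < decay_rate.
Proof.
assert (0 < eps2) by (rewrite eps_ratio; apply Rmult_lt_0_compat; [nra| auto]).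
unfold decay_rate; repeat apply Rmin_glb_lt; lra.
Qed.

(* The boundary fluxes of the two heat energies cancel in the weighted sum:
   with W1(0) = W2(0) = w and Wx1(0) = -a Wx2(0), only dissipation remains. *)
Lemma boundary_flux_cancel w wx1 wx2 J1 J2 : wx1 + a * wx2 = 0 ->
  heat_weight * (- 2 * eps1 * (w * wx1 + J1) + / a * (- 2 * eps2 * (w * wx2 + J2)))
  = - 2 * (input_gain + 1) * J1 - 2 * (heat_weight * eps1) * a * J2.
Proof.
intros Hx. replace wx1 with (- (a * wx2)) by lra.
replace (input_gain + 1) with (heat_weight * eps1) by (unfold heat_weight; field; lra).
rewrite eps_ratio. field. lra.
Qed.

(* The energy estimate of the coupled system, in terms of the ODE energy q,
   the heat energies I1, I2, their dissipations J1, J2 and the input w: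
   the input is absorbed by J1 (trace bound w^2 <= J1) and the dissipations
   dominate the energies (Poincare), which yields the rate decay_rate. *)
Lemma coupled_rate_bound q dq w I1 I2 J1 J2 :
  0 <= q -> 0 <= I1 -> 0 <= I2 -> I1 <= J1 -> I2 <= J2 -> w * w <= J1 ->
  dq <= - c * q + input_gain * (w * w) ->
  dq + (- 2 * (input_gain + 1) * J1 - 2 * (heat_weight * eps1) * a * J2)
  <= - decay_rate * (q + heat_weight * (I1 + / a * I2)).
Proof.
intros Hq HI1 HI2 P1 P2 T1 Hdq.
set (gam := heat_weight).
assert (Hgam : gam * eps1 = input_gain + 1) by (unfold gam, heat_weight; field; lra).
assert (Hg0 := input_gain_nonneg). assert (Hgp := heat_weight_pos). fold gam in Hgp.
assert (Hm1 : decay_rate <= c) by apply Rmin_l.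
assert (Hm2 : decay_rate <= eps1) by (eapply Rle_trans; [apply Rmin_r| apply Rmin_l]).
assert (Hm3 : decay_rate <= 2 * eps2) by (eapply Rle_trans; [apply Rmin_r| apply Rmin_r]).
assert (Hmp := decay_rate_pos).
assert (HJ1 : 0 <= J1) by (generalize (Rle_0_sqr w); unfold Rsqr; lra).
assert (A1 : - c * q <= - decay_rate * q) by nra.
assert (A2 : input_gain * (w * w) <= input_gain * J1) by (apply Rmult_le_compat_l; auto).
assert (A3 : decay_rate * gam * I1 <= (input_gain + 1) * J1).
{ rewrite <- Hgam. apply Rle_trans with (eps1 * gam * I1).
  - apply Rmult_le_compat_r; [auto| nra].
  - rewrite (Rmult_comm gam eps1). apply Rmult_le_compat_l; [nra| auto]. }
assert (A4 : decay_rate * gam * (/ a * I2) <= 2 * (gam * eps1) * a * J2).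
{ assert (Hia : 0 < / a) by (apply Rinv_0_lt_compat; auto).
  assert (decay_rate * / a <= 2 * eps1 * a).
  { apply Rle_trans with (2 * eps2 * / a); [apply Rmult_le_compat_r; lra|].
    rewrite eps_ratio. right. field. lra. }
  replace (decay_rate * gam * (/ a * I2)) with (gam * (decay_rate * / a) * I2) by ring.
  replace (2 * (gam * eps1) * a * J2) with (gam * (2 * eps1 * a) * J2) by ring.
  apply Rle_trans with (gam * (2 * eps1 * a) * I2).
  - apply Rmult_le_compat_r; [auto| apply Rmult_le_compat_l; lra].
  - apply Rmult_le_compat_l; [nra| auto]. }
lra.
Qed.

Lemma lyap_decay W1 W2 Z : coupled_solution W1 W2 Z ->
  forall s, t0 < s -> exists d, derivable_pt_lim (lyap W1 W2 Z) s d /\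
                               d <= - decay_rate * lyap W1 W2 Z s.
Proof.
intros [Wx1 [Wx2 [Wxx1 [Wxx2 [H1 [H2 [BC [_ ZD]]]]]]]] s Hs.
destruct (BC s Hs) as [Bx B0].
set (Zd := fun i => mat_vec n M (Z s) i + b i * W1 0 s).
assert (HZ : forall i, (i < n)%nat -> derivable_pt_lim (fun u => Z u i) s (Zd i)).
{ intros i Hi. unfold Zd.
  replace (b i * W1 0 s) with (b i * (theta * W1 0 s + (1 - theta) * W2 0 s))
    by (rewrite <- B0; ring).
  apply ZD; auto. }
destruct (heat_dissipation_bounds t0 eps1 W1 Wx1 Wxx1 H1 s Hs) as [P1 T1].
destruct (heat_dissipation_bounds t0 eps2 W2 Wx2 Wxx2 H2 s Hs) as [P2 _].
exists (ode_energy_rate (Z s) Zd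
        + heat_weight * (- 2 * eps1 * (W1 0 s * Wx1 0 s + sqL2 Wx1 s)
                         + / a * (- 2 * eps2 * (W2 0 s * Wx2 0 s + sqL2 Wx2 s)))).
split.
- apply (derivable_pt_lim_plus (fun u => ode_energy (Z u))); [apply ode_energy_derivable; auto|].
  apply derivable_pt_lim_scal, derivable_pt_lim_plus; [|apply derivable_pt_lim_scal].
  + apply (heat_energy_identity t0 eps1 W1 Wx1 Wxx1); auto.
  + apply (heat_energy_identity t0 eps2 W2 Wx2 Wxx2); auto.
- rewrite <- B0, boundary_flux_cancel by auto.
  apply (coupled_rate_bound _ _ (W1 0 s)); auto.
  + apply ode_energy_nonneg.
  + apply (heat_sqL2_nonneg t0 eps1 W1 Wx1 Wxx1); auto; lra.
  + apply (heat_sqL2_nonneg t0 eps2 W2 Wx2 Wxx2); auto; lra.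
  + apply ode_energy_rate_bound.
Qed.

Lemma lyap_right_cont W1 W2 Z : coupled_solution W1 W2 Z ->
  limit1_in (lyap W1 W2 Z) (fun s => t0 <= s) (lyap W1 W2 Z t0) t0.
Proof.
intros [Wx1 [Wx2 [Wxx1 [Wxx2 [H1 [H2 [_ [ZC _]]]]]]]].
apply (limit_plus (fun u => ode_energy (Z u))).
- apply ode_energy_right_cont. intros i Hi. apply ZC; auto; lra.
- apply (limit_mul (fun _ => heat_weight)); [apply (limit_free (fun _ => heat_weight) _ 0 t0)|].
  apply (limit_plus (sqL2 W1)); [apply (heat_sqL2_right_cont t0 eps1 W1 Wx1 Wxx1 H1)|].
  apply (limit_mul (fun _ => / a)); [apply (limit_free (fun _ => / a) _ 0 t0)|].
  apply (heat_sqL2_right_cont t0 eps2 W2 Wx2 Wxx2 H2).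
Qed.

Lemma lyap_equiv : exists m K, 0 < m /\ 0 < K /\
  forall W1 W2 Z s, 0 <= sqL2 W1 s -> 0 <= sqL2 W2 s ->
    m * state_sqnorm W1 W2 Z s <= lyap W1 W2 Z s <= K * state_sqnorm W1 W2 Z s.
Proof.
destruct ode_energy_equiv as [kmin [kmax [Hkmin [Hkmax Hk]]]].
assert (Hg := heat_weight_pos).
assert (Hga : 0 < heat_weight * / a) by (apply Rmult_lt_0_compat; [auto| apply Rinv_0_lt_compat; auto]).
exists (Rmin kmin (Rmin heat_weight (heat_weight * / a))), (kmax + heat_weight + heat_weight * / a).
split; [repeat apply Rmin_glb_lt; auto|]. split; [lra|].
intros W1 W2 Z s HI1 HI2.
set (m := Rmin kmin (Rmin heat_weight (heat_weight * / a))).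
assert (Hm1 : m <= kmin) by apply Rmin_l.
assert (Hm2 : m <= heat_weight) by (eapply Rle_trans; [apply Rmin_r| apply Rmin_l]).
assert (Hm3 : m <= heat_weight * / a) by (eapply Rle_trans; [apply Rmin_r| apply Rmin_r]).
assert (Hm : 0 < m) by (repeat apply Rmin_glb_lt; auto).
destruct (Hk (Z s)) as [Q1 Q2].
assert (HZ : 0 <= rsum n (fun i => Z s i * Z s i)) by (apply rsum_nonneg; intros; apply Rle_0_sqr).
unfold lyap, state_sqnorm. split; nra.
Qed.

Lemma coupled_exponential_stability : exists P mu, 0 < P /\ 0 < mu /\
  forall W1 W2 Z, coupled_solution W1 W2 Z -> forall t, t0 <= t ->
    state_sqnorm W1 W2 Z t <= P * exp (- mu * (t - t0)) * state_sqnorm W1 W2 Z t0.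
Proof.
destruct lyap_equiv as [m [K [Hm [HK Heq]]]].
exists (K / m), decay_rate. split; [apply Rdiv_lt_0_compat; auto|]. split; [apply decay_rate_pos|].
intros W1 W2 Z Hsol t Ht.
assert (Hnn : forall s, t0 <= s -> 0 <= sqL2 W1 s /\ 0 <= sqL2 W2 s).
{ destruct Hsol as [Wx1 [Wx2 [Wxx1 [Wxx2 [H1 [H2 _]]]]]]. intros s Hs.
  split; [apply (heat_sqL2_nonneg t0 eps1 W1 Wx1 Wxx1)| apply (heat_sqL2_nonneg t0 eps2 W2 Wx2 Wxx2)]; auto. }
assert (HV := comparison_exponential (lyap W1 W2 Z) t0 decay_rate
                (lyap_decay W1 W2 Z Hsol) (lyap_right_cont W1 W2 Z Hsol) t Ht).
destruct (Hnn t Ht) as [a1 a2]. destruct (Hnn t0 (Rle_refl t0)) as [b1 b2].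
destruct (Heq W1 W2 Z t a1 a2) as [L _]. destruct (Heq W1 W2 Z t0 b1 b2) as [_ U].
assert (HE : 0 < exp (- decay_rate * (t - t0))) by apply exp_pos.
apply (Rmult_le_reg_l m); auto.
replace (m * (K / m * exp (- decay_rate * (t - t0)) * state_sqnorm W1 W2 Z t0))
  with (exp (- decay_rate * (t - t0)) * (K * state_sqnorm W1 W2 Z t0)) by (field; lra).
apply Rle_trans with (lyap W1 W2 Z t); auto.
apply Rle_trans with (exp (- decay_rate * (t - t0)) * lyap W1 W2 Z t0); auto.
apply Rmult_le_compat_l; lra.
Qed.

End CoupledSystem.

Lemma target_solution_coupled eps y0 theta n A B G0 t0 W1 W2 Z :
  target_solution eps y0 theta n A B G0 t0 W1 W2 Z ->
  coupled_solution n (closed_loop A B G0) B (eps / (1 + y0) ^ 2) (eps / (1 - y0) ^ 2)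
    ((1 + y0) / (1 - y0)) theta t0 W1 W2 Z.
Proof.
intros [Wx1 [Wx2 [Wxx1 [Wxx2 [C1 [C2 [Cx1 [Cx2 [Cxx1 [Cxx2 [Dx [Dt [BC [ZC ZD]]]]]]]]]]]]]].
exists Wx1, Wx2, Wxx1, Wxx2. split; [|split; [|split; [|split]]]; auto.
- split; [auto| split; [auto| split; [auto| split; [|split]]]].
  + intros x t Hx Ht. destruct (Dx x t Hx Ht) as [? [_ [? _]]]. auto.
  + intros x t Hx Ht. apply (Dt x t Hx Ht).
  + intros t Ht. apply (BC t Ht).
- split; [auto| split; [auto| split; [auto| split; [|split]]]].
  + intros x t Hx Ht. destruct (Dx x t Hx Ht) as [_ [? [_ ?]]]. auto.
  + intros x t Hx Ht. apply (Dt x t Hx Ht).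
  + intros t Ht. apply (BC t Ht).
- intros t Ht. destruct (BC t Ht) as [? [? _]]. auto.
Qed.

Lemma sq_norm_state n (W1 W2 : R -> R -> R) (Z : R -> nat -> R) t0 s :
  jcont_on (fun x t => I01 x /\ t0 <= t) W1 -> jcont_on (fun x t => I01 x /\ t0 <= t) W2 ->
  t0 <= s -> forall pr : Riemann_integrable (fun x => W1 x s ^ 2 + W2 x s ^ 2) 0 1,
  sq_norm n Z s pr = state_sqnorm n W1 W2 Z s.
Proof.
intros C1 C2 Hs pr.
assert (c1 : cont01 (fun x => W1 x s)) by (apply (jcont_slice _ W1 s C1); intros; split; auto).
assert (c2 : cont01 (fun x => W2 x s)) by (apply (jcont_slice _ W2 s C2); intros; split; auto).
unfold sq_norm, state_sqnorm, sqL2. rewrite <- RInt_Reals.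
rewrite (RInt_ext_open _ (fun x => W1 x s * W1 x s + W2 x s * W2 x s)) by (lra || (intros; ring)).
rewrite RInt_plus_R by (apply cont01_ex_RInt; auto using cont01_mult; lra).
f_equal. apply rsum_ext; intros; ring.
Qed.

Lemma sqrt_exponential_bound P mu N N0 t t0 : 0 <= P ->
  N <= P * exp (- mu * (t - t0)) * N0 ->
  sqrt N <= sqrt P * exp (- (mu / 2) * (t - t0)) * sqrt N0.
Proof.
intros HP HN.
assert (HE : exp (- mu * (t - t0)) = exp (- (mu / 2) * (t - t0)) * exp (- (mu / 2) * (t - t0)))
  by (rewrite <- exp_plus; f_equal; field).
assert (He := exp_pos (- (mu / 2) * (t - t0))).
eapply Rle_trans; [apply sqrt_le_1_alt, HN|].
rewrite HE, sqrt_mult_alt, sqrt_mult_alt, sqrt_square by (try apply Rmult_le_pos; nra).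
lra.
Qed.

Theorem lemma1 (eps y0 theta : R) (n : nat)
  (A : nat -> nat -> R) (B : nat -> R) (G0 : nat -> R)
  (Heps : 0 < eps) (Hy0 : -1 < y0 < 0) (Htheta : 0 <= theta <= 1)
  (HHurwitz : Hurwitz n (closed_loop A B G0)) (t0 : R) :
  exists Pi mu : R, 0 < Pi /\ 0 < mu /\
    forall (W1 W2 : R -> R -> R) (Z : R -> nat -> R),
      target_solution eps y0 theta n A B G0 t0 W1 W2 Z ->
      forall t (Ht : t0 <= t)
        (prt : Riemann_integrable (fun x => W1 x t ^ 2 + W2 x t ^ 2) 0 1)
        (pr0 : Riemann_integrable (fun x => W1 x t0 ^ 2 + W2 x t0 ^ 2) 0 1),
        sqrt (sq_norm n Z t prt)
          <= Pi * exp (- mu * (t - t0)) * sqrt (sq_norm n Z t0 pr0).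
Proof.
destruct (hurwitz_lyapunov n _ HHurwitz) as [Gr [Gi [k [c [Hc [Hk [Hiso Hdec]]]]]]].
assert (He1 : 0 < eps / (1 + y0) ^ 2) by (apply Rdiv_lt_0_compat; [lra| apply pow_lt; lra]).
assert (Ha : 0 < (1 + y0) / (1 - y0)) by (apply Rdiv_lt_0_compat; lra).
assert (Hratio : eps / (1 - y0) ^ 2
                 = (1 + y0) / (1 - y0) * ((1 + y0) / (1 - y0)) * (eps / (1 + y0) ^ 2))
  by (field; lra).
destruct (coupled_exponential_stability n (closed_loop A B G0) B Gr Gi k c Hc Hk Hiso Hdec
            _ _ _ theta t0 He1 Ha Hratio) as [P [mu [HP [Hmu Hstab]]]].
exists (sqrt P), (mu / 2). split; [apply sqrt_lt_R0; auto| split; [lra|]].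
intros W1 W2 Z Hsol t Ht prt pr0.
assert (C : jcont_on (fun x t => I01 x /\ t0 <= t) W1 /\ jcont_on (fun x t => I01 x /\ t0 <= t) W2)
  by (destruct Hsol as [? [? [? [? [? [? _]]]]]]; auto).
rewrite (sq_norm_state n W1 W2 Z t0 t (proj1 C) (proj2 C) Ht prt),
        (sq_norm_state n W1 W2 Z t0 t0 (proj1 C) (proj2 C) (Rle_refl t0) pr0).
apply sqrt_exponential_bound; [lra|].
apply (Hstab W1 W2 Z (target_solution_coupled _ _ _ _ _ _ _ _ _ _ _ Hsol) t Ht).
Qed.
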